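(* Let $(H,h)$ be an equivariant pair and let $\{(H_n,h_n)\}$ be a tame sequence derived from $(H,h)$. Then there exist $f,g\in\mathcal{I}$ such that, setting $H'=fHg$ and $h'=fhg$, there is a subsequence along which $H_n$ converges to $H'$ uniformly on compact subsets of $\mathbb{H}^3$ and $h_n$ converges to $h'$ uniformly on $S$.
   Context: $\mathbb{H}^3$ is the upper half space model $\mathbb{C}\times(0,\infty)$ of hyperbolic $3$-space, with ideal boundary the Riemann sphere $S=\mathbb{C}\cup\{\infty\}$ (uniform convergence on $S$ is with respect to the spherical metric); $\mathcal{I}$ is the isometry group of $\mathbb{H}^3$, and each element of $\mathcal{I}$ extends to a conformal transformation of $S$, so $\mathcal{I}$ acts on $\mathbb{H}^3\cup S$. A nice lattice is a subgroup $\Gamma\subset\mathcal{I}$ acting freely, properly discontinuously and cocompactly on $\mathbb{H}^3$. An equivariant pair $(H,h)$ consists of a bi-Lipschitz bijection $H:\mathbb{H}^3\to\mathbb{H}^3$ and a homeomorphism $h:S\to S$ such that $H\cup h$ is continuous on $\mathbb{H}^3\cup S$, together with nice lattices $\Gamma_1,\Gamma_2$ with $H\Gamma_1H^{-1}=\Gamma_2$ and $h\Gamma_1h^{-1}=\Gamma_2$. A sequence $\{(H_n,h_n)\}$ is derived from $(H,h)$ if $H_n=f_nHg_n$ and $h_n=f_nhg_n$ for some $f_n,g_n\in\mathcal{I}$; it is tame if $\{H_n(p)\}$ is bounded for every $p\in\mathbb{H}^3$. *)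

From Stdlib Require Import Reals Lra List.
Open Scope R_scope.

(** * Upper half space model H^3 = C x (0,oo), points (x, y, t) with t > 0 *)
Record H3 : Type := mkH3 { hx : R; hy : R; ht : R; ht_pos : 0 < ht }.

(** Ideal boundary: the Riemann sphere S = C u {oo}, C identified with R x R. *)
Inductive Sph : Type := Fin (x y : R) | Inf.

Definition arcosh (u : R) : R := ln (u + sqrt (u * u - 1)).
Definition hd (p q : H3) : R :=
  arcosh (1 + ((hx p - hx q)^2 + (hy p - hy q)^2 + (ht p - ht q)^2)
                / (2 * ht p * ht q)).

(** The compactification H^3 u S: the closure of the upper half space in
    R^3 u {oo} = S^3, via inverse stereographic projection R^3 -> S^3 c R^4. *)
Definition X : Type := (H3 + Sph)%type.

Definition stereo (x y t : R) : R * R * R * R :=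
  let n := x^2 + y^2 + t^2 in
  (2 * x / (n + 1), 2 * y / (n + 1), 2 * t / (n + 1), (n - 1) / (n + 1)).

Definition embX (a : X) : R * R * R * R :=
  match a with
  | inl p => stereo (hx p) (hy p) (ht p)
  | inr (Fin x y) => stereo x y 0
  | inr Inf => (0, 0, 0, 1)
  end.

Definition dist4 (u v : R * R * R * R) : R :=
  let '(a1, a2, a3, a4) := u in let '(b1, b2, b3, b4) := v in
  sqrt ((a1 - b1)^2 + (a2 - b2)^2 + (a3 - b3)^2 + (a4 - b4)^2).

Definition dX (a b : X) : R := dist4 (embX a) (embX b).

(** spherical (great-circle) metric on S, via stereographic projection onto
    the unit sphere: 2 asin (chord / 2) *)
Definition dS (z w : Sph) : R := 2 * asin (dX (inr z) (inr w) / 2).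

Definition joinmap (F : H3 -> H3) (f : Sph -> Sph) (a : X) : X :=
  match a with inl p => inl (F p) | inr z => inr (f z) end.

Definition continuousX (J : X -> X) : Prop :=
  forall a eps, 0 < eps -> exists delta, 0 < delta /\
    forall b, dX a b < delta -> dX (J a) (J b) < eps.

Definition continuousS (f : Sph -> Sph) : Prop :=
  forall z eps, 0 < eps -> exists delta, 0 < delta /\
    forall w, dS z w < delta -> dS (f z) (f w) < eps.

Definition bijective {A B : Type} (f : A -> B) : Prop :=
  (forall a b, f a = f b -> a = b) /\ (forall b, exists a, f a = b).

(** * The isometry group I.  An element of I is an isometry G of H^3 together
    with its (unique) extension g to S, i.e. G u g is continuous on H^3 u S. *)
Definition isom (G : H3 -> H3) (g : Sph -> Sph) : Prop :=
  bijective G /\ (forall p q, hd (G p) (G q) = hd p q) /\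
  continuousX (joinmap G g).

Definition subgroupI (Gam : (H3 -> H3) -> (Sph -> Sph) -> Prop) : Prop :=
  (forall G g, Gam G g -> isom G g) /\
  Gam (fun p => p) (fun z => z) /\
  (forall G g G' g', Gam G g -> Gam G' g' ->
     Gam (fun p => G (G' p)) (fun z => g (g' z))) /\
  (forall G g, Gam G g -> exists G' g', Gam G' g' /\
     (forall p, G (G' p) = p) /\ (forall p, G' (G p) = p) /\
     (forall z, g (g' z) = z) /\ (forall z, g' (g z) = z)).

Definition compactH (K : H3 -> Prop) : Prop :=
  forall u : nat -> H3, (forall n, K (u n)) ->
    exists (phi : nat -> nat) (q : H3), (forall k, (phi k < phi (S k))%nat) /\ K q /\
      forall eps, 0 < eps -> exists N, forall k, (N <= k)%nat -> hd (u (phi k)) q < eps.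

Definition acts_freely (Gam : (H3 -> H3) -> (Sph -> Sph) -> Prop) : Prop :=
  forall G g, Gam G g -> (exists p, G p = p) -> forall q, G q = q.

Definition properly_discontinuous (Gam : (H3 -> H3) -> (Sph -> Sph) -> Prop) : Prop :=
  forall K, compactH K ->
    exists l : list ((H3 -> H3) * (Sph -> Sph)),
      forall G g, Gam G g -> (exists q, K q /\ K (G q)) -> In (G, g) l.

Definition cocompact (Gam : (H3 -> H3) -> (Sph -> Sph) -> Prop) : Prop :=
  exists K, compactH K /\ forall q, exists G g k, Gam G g /\ K k /\ G k = q.

Definition nice_lattice (Gam : (H3 -> H3) -> (Sph -> Sph) -> Prop) : Prop :=
  subgroupI Gam /\ acts_freely Gam /\ properly_discontinuous Gam /\ cocompact Gam.

Definition bilipschitz_bijection (H : H3 -> H3) : Prop :=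
  bijective H /\ exists L, 0 < L /\
    forall p q, hd p q / L <= hd (H p) (H q) /\ hd (H p) (H q) <= L * hd p q.

Definition homeomorphismS (h : Sph -> Sph) : Prop :=
  exists h', (forall z, h' (h z) = z) /\ (forall z, h (h' z) = z) /\
    continuousS h /\ continuousS h'.

(** H Gam1 H^{-1} = Gam2 (as sets of isometries of H^3) and
    h Gam1 h^{-1} = Gam2 (as sets of boundary maps); F = H G H^{-1} is
    written F o H = H o G (H bijective). *)
Definition equivariant_pair (H : H3 -> H3) (h : Sph -> Sph)
    (Gam1 Gam2 : (H3 -> H3) -> (Sph -> Sph) -> Prop) : Prop :=
  bilipschitz_bijection H /\ homeomorphismS h /\ continuousX (joinmap H h) /\
  nice_lattice Gam1 /\ nice_lattice Gam2 /\
  (forall F, (exists f, Gam2 F f) <->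
     (exists G g, Gam1 G g /\ forall p, F (H p) = H (G p))) /\
  (forall f, (exists F, Gam2 F f) <->
     (exists G g, Gam1 G g /\ forall z, f (h z) = h (g z))).

Definition derived (H : H3 -> H3) (h : Sph -> Sph)
    (Hn : nat -> H3 -> H3) (hn : nat -> Sph -> Sph) : Prop :=
  exists (fI gI : nat -> H3 -> H3) (fB gB : nat -> Sph -> Sph),
    (forall n, isom (fI n) (fB n)) /\ (forall n, isom (gI n) (gB n)) /\
    (forall n p, Hn n p = fI n (H (gI n p))) /\
    (forall n z, hn n z = fB n (h (gB n z))).

Definition tame (Hn : nat -> H3 -> H3) : Prop :=
  forall p, exists q r, forall n, hd q (Hn n p) <= r.

Definition unif_cvg_compacts (Fk : nat -> H3 -> H3) (F : H3 -> H3) : Prop :=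
  forall K, compactH K -> forall eps, 0 < eps -> exists N, forall k, (N <= k)%nat ->
    forall p, K p -> hd (Fk k p) (F p) < eps.

Definition unif_cvg_S (fk : nat -> Sph -> Sph) (f : Sph -> Sph) : Prop :=
  forall eps, 0 < eps -> exists N, forall k, (N <= k)%nat ->
    forall z, dS (fk k z) (f z) < eps.

(* Using cocompactness of the first lattice and the equivariance of H, write
   H_n = A_n o H o B_n with isometries A_n, B_n that move the origin a bounded amount (B_n by
   cocompactness, A_n then by tameness).  On the compactification H^3 u S, viewed as a
   hemisphere of S^3 with the chordal metric, such isometries are uniformly Lipschitz, so by
   Arzela-Ascoli a subsequence of each converges uniformly on H^3 u S, and the limits are
   again isometries.  Since H u h is uniformly continuous, H_n u h_n then converges uniformly
   to A o H o B u a o h o b in the chordal metric; on S this is uniform convergence for the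
   spherical metric, and on a compact set of H^3, which stays at bounded height, the chordal
   metric controls the hyperbolic one. *)

From Pilot Require Import Defs.
From Stdlib Require Import Reals Lra List.
From Stdlib Require Import ZArith Lia Psatz Cantor.
From Stdlib Require Import Classical ClassicalEpsilon ProofIrrelevance FunctionalExtensionality.
(* [List] exports its own [hd]; re-importing [Defs] makes [hd] the hyperbolic distance again. *)
Import Defs.
Open Scope R_scope.

Ltac add_sq_nonneg := repeat match goal with
  | |- context [?x ^ 2] => lazymatch goal with
       | _ : 0 <= x ^ 2 |- _ => fail | _ => assert (0 <= x^2) by apply pow2_ge_0 end
  | _ : context [?x ^ 2] |- _ => lazymatch goal with
       | _ : 0 <= x ^ 2 |- _ => fail | _ => assert (0 <= x^2) by apply pow2_ge_0 end
  end.

Lemma pow2_le_reg a c : 0 <= a -> 0 <= c -> a ^ 2 <= c ^ 2 -> a <= c.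
Proof. intros. nra. Qed.

Lemma pow2_lt_reg a c : 0 <= a -> 0 <= c -> a ^ 2 < c ^ 2 -> a < c.
Proof. intros. nra. Qed.

Lemma pow2_lt_of_Rabs_lt d b : Rabs d < b -> d ^ 2 < b ^ 2.
Proof. intro H. rewrite <- pow2_abs. pose proof (Rabs_pos d). nra. Qed.

Lemma pow2_le_of_Rabs_le d b : Rabs d <= b -> d ^ 2 <= b ^ 2.
Proof. intro H. rewrite <- pow2_abs. pose proof (Rabs_pos d). nra. Qed.

Lemma sum_sq3_eq0 a b c : a ^ 2 + b ^ 2 + c ^ 2 = 0 -> a = 0 /\ b = 0 /\ c = 0.
Proof. intro H. split; [|split]; nra. Qed.

Lemma Rdiv_nonneg a b : 0 <= a -> 0 < b -> 0 <= a / b.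
Proof. intros. apply Rle_mult_inv_pos; assumption. Qed.

Lemma H3_ext p q : hx p = hx q -> hy p = hy q -> ht p = ht q -> p = q.
Proof.
  destruct p as [x y t h], q as [x' y' t' h']; simpl; intros -> -> ->.
  f_equal. apply proof_irrelevance.
Qed.

(** * Hyperbolic distance through its hyperbolic cosine *)

Definition origin : H3 := mkH3 0 0 1 Rlt_0_1.

Definition cosh_hd (p q : H3) : R :=
  1 + ((hx p - hx q)^2 + (hy p - hy q)^2 + (ht p - ht q)^2) / (2 * ht p * ht q).

Lemma hd_cosh_hd p q : hd p q = arcosh (cosh_hd p q).
Proof. reflexivity. Qed.

Lemma cosh_hd_ge1 p q : 1 <= cosh_hd p q.
Proof.
  unfold cosh_hd. pose proof (ht_pos p). pose proof (ht_pos q).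
  assert (0 <= ((hx p - hx q)^2 + (hy p - hy q)^2 + (ht p - ht q)^2) / (2 * ht p * ht q))
    by (apply Rdiv_nonneg; add_sq_nonneg; nra).
  lra.
Qed.

Lemma cosh_hd_sym p q : cosh_hd p q = cosh_hd q p.
Proof. unfold cosh_hd. f_equal. f_equal; ring. Qed.

Lemma cosh_hd_refl p : cosh_hd p p = 1.
Proof. unfold cosh_hd. pose proof (ht_pos p). field. lra. Qed.

Lemma cosh_hd_E p q : cosh_hd p q =
  ((hx p - hx q)^2 + (hy p - hy q)^2 + ht p ^2 + ht q ^2) / (2 * ht p * ht q).
Proof. unfold cosh_hd. pose proof (ht_pos p). pose proof (ht_pos q). field. lra. Qed.

Lemma cosh_hd_origin p : cosh_hd origin p = (hx p ^2 + hy p ^2 + ht p ^2 + 1) / (2 * ht p).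
Proof. rewrite cosh_hd_E. simpl. pose proof (ht_pos p). field. lra. Qed.

(* The multiplicative form of the triangle inequality, cosh (a + b) <= 2 cosh a cosh b. *)
Lemma cosh_hd_triangle p q r : cosh_hd p r <= 2 * cosh_hd p q * cosh_hd q r.
Proof.
  rewrite !cosh_hd_E.
  pose proof (ht_pos p) as Hp. pose proof (ht_pos q) as Hq. pose proof (ht_pos r) as Hr.
  set (u1 := hx p - hx q). set (u2 := hy p - hy q).
  set (v1 := hx q - hx r). set (v2 := hy q - hy r).
  replace (hx p - hx r) with (u1 + v1) by (unfold u1, v1; ring).
  replace (hy p - hy r) with (u2 + v2) by (unfold u2, v2; ring).
  set (a := ht p) in *. set (b := ht q) in *. set (c := ht r) in *.
  assert (key : ((u1+v1)^2 + (u2+v2)^2 + a^2 + c^2) * b^2 <=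
     (u1^2 + u2^2 + a^2 + b^2) * (v1^2 + v2^2 + b^2 + c^2)).
  { assert (0 <= (u1*v1 + u2*v2 - b^2)^2) by apply pow2_ge_0.
    assert (0 <= (u1*v2 - u2*v1)^2) by apply pow2_ge_0.
    assert (0 <= a^2 * c^2) by (apply Rmult_le_pos; apply pow2_ge_0).
    assert (0 <= (u1^2+u2^2) * c^2) by (apply Rmult_le_pos; add_sq_nonneg; lra).
    assert (0 <= a^2 * (v1^2+v2^2)) by (apply Rmult_le_pos; add_sq_nonneg; lra).
    nra. }
  apply (Rmult_le_reg_r (2 * a * b * b * c)); [repeat apply Rmult_lt_0_compat; lra|].
  replace (((u1 + v1) ^ 2 + (u2 + v2) ^ 2 + a ^ 2 + c ^ 2) / (2 * a * c) * (2 * a * b * b * c))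
    with (((u1 + v1) ^ 2 + (u2 + v2) ^ 2 + a ^ 2 + c ^ 2) * b^2) by (field; lra).
  replace (2 * ((u1 ^ 2 + u2 ^ 2 + a ^ 2 + b ^ 2) / (2 * a * b)) *
    ((v1 ^ 2 + v2 ^ 2 + b ^ 2 + c ^ 2) / (2 * b * c)) * (2 * a * b * b * c))
   with ((u1^2 + u2^2 + a^2 + b^2) * (v1^2 + v2^2 + b^2 + c^2)) by (field; lra).
  exact key.
Qed.

Lemma cosh_hd_eq1 p q : cosh_hd p q = 1 -> p = q.
Proof.
  unfold cosh_hd. intro E. pose proof (ht_pos p). pose proof (ht_pos q).
  assert (Z : (hx p - hx q)^2 + (hy p - hy q)^2 + (ht p - ht q)^2 = 0).
  { assert (Z : ((hx p - hx q)^2 + (hy p - hy q)^2 + (ht p - ht q)^2) / (2 * ht p * ht q) = 0)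
      by lra.
    apply Rmult_integral in Z as [Z|Z]; [exact Z|].
    exfalso. revert Z. apply Rinv_neq_0_compat. nra. }
  apply sum_sq3_eq0 in Z as (Z1 & Z2 & Z3). apply H3_ext; lra.
Qed.

Lemma arcosh_lt u v : 1 <= u -> u < v -> arcosh u < arcosh v.
Proof.
  intros Hu Huv. unfold arcosh. apply ln_increasing.
  - pose proof (sqrt_pos (u*u-1)); lra.
  - assert (sqrt (u*u-1) <= sqrt (v*v-1)) by (apply sqrt_le_1_alt; nra). lra.
Qed.

Lemma arcosh_inj u v : 1 <= u -> 1 <= v -> arcosh u = arcosh v -> u = v.
Proof.
  intros Hu Hv E. destruct (Rtotal_order u v) as [H|[H|H]]; auto.
  - pose proof (arcosh_lt u v Hu H); lra.
  - pose proof (arcosh_lt v u Hv H); lra.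
Qed.

Lemma ln_le_arcosh u : 1 <= u -> ln u <= arcosh u.
Proof.
  intro H. unfold arcosh. pose proof (sqrt_pos (u*u-1)) as [Hs|Hs].
  - left. apply ln_increasing; lra.
  - rewrite <- Hs, Rplus_0_r. lra.
Qed.

Lemma arcosh_le_ln_double u : 1 <= u -> arcosh u <= ln (2 * u).
Proof.
  intro H. unfold arcosh.
  assert (sqrt (u*u-1) <= u).
  { pose proof (sqrt_le_1_alt (u * u - 1) (u * u) ltac:(lra)) as Hs.
    rewrite sqrt_square in Hs by lra. exact Hs. }
  pose proof (sqrt_pos (u*u-1)).
  destruct (Req_dec (u + sqrt (u*u-1)) (2*u)) as [E|E]; [rewrite E; lra|].
  left. apply ln_increasing; lra.
Qed.

Lemma arcosh_le_sqrt u : 1 <= u -> arcosh u <= (u - 1) + sqrt (u * u - 1).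
Proof.
  intro H. unfold arcosh. pose proof (sqrt_pos (u*u-1)).
  pose proof (exp_ineq1_le (ln (u + sqrt (u*u-1)))) as Hexp.
  rewrite exp_ln in Hexp by lra. lra.
Qed.

Lemma cosh_hd_le_exp_hd p q : cosh_hd p q <= exp (hd p q).
Proof.
  rewrite hd_cosh_hd. pose proof (cosh_hd_ge1 p q) as Hge1.
  rewrite <- (exp_ln (cosh_hd p q)) at 1 by lra.
  pose proof (ln_le_arcosh _ Hge1) as [Hl|Hl]; [left; apply exp_increasing, Hl|rewrite Hl; lra].
Qed.

Lemma hd_le_ln_cosh_hd p q : hd p q <= ln (2 * cosh_hd p q).
Proof. rewrite hd_cosh_hd. apply arcosh_le_ln_double, cosh_hd_ge1. Qed.

Lemma cosh_hd_le_exp p q r : hd p q <= r -> cosh_hd p q <= exp r.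
Proof.
  intros [Hr|Hr]; eapply Rle_trans; try apply cosh_hd_le_exp_hd.
  - left. apply exp_increasing, Hr.
  - rewrite Hr. lra.
Qed.

Lemma hd_lt_of_cosh_hd p q eps : 0 < eps -> eps <= 1 ->
  cosh_hd p q - 1 <= eps * eps / 9 -> hd p q < eps.
Proof.
  intros He He1 Hc. rewrite hd_cosh_hd. pose proof (cosh_hd_ge1 p q).
  eapply Rle_lt_trans; [apply arcosh_le_sqrt; assumption|].
  set (s := cosh_hd p q - 1) in *.
  replace (cosh_hd p q * cosh_hd p q - 1) with (s * (s + 2)) by (unfold s; ring).
  assert (Hs : 0 <= s) by (unfold s; lra). clearbody s.
  assert (Heps : eps * eps <= eps) by nra.
  assert (s * (s + 2) <= (eps / 2) ^ 2).
  { assert (s * s <= (eps * eps / 9) * (eps * eps / 9)) by (apply Rmult_le_compat; lra). nra. }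
  assert (sqrt (s * (s + 2)) <= eps / 2).
  { rewrite <- (sqrt_pow2 (eps / 2)) by lra. apply sqrt_le_1_alt. assumption. }
  lra.
Qed.

Lemma isom_cosh_hd G g p q : isom G g -> cosh_hd (G p) (G q) = cosh_hd p q.
Proof.
  intros (_ & Hd & _). apply arcosh_inj; try apply cosh_hd_ge1.
  rewrite <- !hd_cosh_hd. apply Hd.
Qed.

Lemma cosh_hd_origin_isom_le G g M p : isom G g -> cosh_hd origin (G origin) <= M ->
  cosh_hd origin (G p) <= 2 * M * cosh_hd origin p.
Proof.
  intros HG HM. pose proof (cosh_hd_triangle origin (G origin) (G p)) as Htri.
  rewrite (isom_cosh_hd G g origin p HG) in Htri.
  pose proof (cosh_hd_ge1 origin p). pose proof (cosh_hd_ge1 (G origin) (G p)). nra.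
Qed.

(** * The chordal metric on the compactification *)

Definition c1 (w : R * R * R * R) : R := fst (fst (fst w)).
Definition c2 (w : R * R * R * R) : R := snd (fst (fst w)).
Definition c3 (w : R * R * R * R) : R := snd (fst w).
Definition c4 (w : R * R * R * R) : R := snd w.

Definition sq4 (u v : R * R * R * R) : R :=
  (c1 u - c1 v)^2 + (c2 u - c2 v)^2 + (c3 u - c3 v)^2 + (c4 u - c4 v)^2.

Lemma dist4_sq4 u v : dist4 u v = sqrt (sq4 u v).
Proof. destruct u as [[[? ?] ?] ?], v as [[[? ?] ?] ?]. reflexivity. Qed.

Lemma sq4_ge0 u v : 0 <= sq4 u v.
Proof. unfold sq4. add_sq_nonneg. lra. Qed.

Lemma cauchy_schwarz4 x1 x2 x3 x4 y1 y2 y3 y4 :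
  x1*y1 + x2*y2 + x3*y3 + x4*y4 <=
  sqrt (x1^2 + x2^2 + x3^2 + x4^2) * sqrt (y1^2 + y2^2 + y3^2 + y4^2).
Proof.
  set (w := x1*y1 + x2*y2 + x3*y3 + x4*y4).
  destruct (Rle_or_lt w 0) as [Hw|Hw].
  - pose proof (sqrt_pos (x1^2 + x2^2 + x3^2 + x4^2)).
    pose proof (sqrt_pos (y1^2 + y2^2 + y3^2 + y4^2)). nra.
  - rewrite <- sqrt_mult by (add_sq_nonneg; lra).
    rewrite <- (sqrt_pow2 w) by lra. apply sqrt_le_1_alt.
    (* Lagrange's identity *)
    assert ((x1^2 + x2^2 + x3^2 + x4^2) * (y1^2 + y2^2 + y3^2 + y4^2) - w^2 =
      (x1*y2-x2*y1)^2 + (x1*y3-x3*y1)^2 + (x1*y4-x4*y1)^2 + (x2*y3-x3*y2)^2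
      + (x2*y4-x4*y2)^2 + (x3*y4-x4*y3)^2) by (unfold w; ring).
    add_sq_nonneg. lra.
Qed.

Lemma minkowski4 x1 x2 x3 x4 y1 y2 y3 y4 :
  sqrt ((x1+y1)^2 + (x2+y2)^2 + (x3+y3)^2 + (x4+y4)^2) <=
  sqrt (x1^2 + x2^2 + x3^2 + x4^2) + sqrt (y1^2 + y2^2 + y3^2 + y4^2).
Proof.
  pose proof (cauchy_schwarz4 x1 x2 x3 x4 y1 y2 y3 y4).
  set (A := x1^2 + x2^2 + x3^2 + x4^2) in *. set (B := y1^2 + y2^2 + y3^2 + y4^2) in *.
  assert (HA : 0 <= A) by (unfold A; add_sq_nonneg; lra).
  assert (HB : 0 <= B) by (unfold B; add_sq_nonneg; lra).
  pose proof (sqrt_pos A). pose proof (sqrt_pos B).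
  rewrite <- (sqrt_pow2 (sqrt A + sqrt B)) by lra. apply sqrt_le_1_alt.
  replace ((sqrt A + sqrt B)^2) with (sqrt A * sqrt A + sqrt B * sqrt B + 2 * (sqrt A * sqrt B))
    by ring.
  rewrite !sqrt_sqrt by assumption. unfold A, B in *. nra.
Qed.

Lemma dX_triangle a b c : dX a c <= dX a b + dX b c.
Proof.
  unfold dX. rewrite !dist4_sq4. unfold sq4.
  set (u := embX a). set (v := embX b). set (w := embX c).
  replace (c1 u - c1 w) with ((c1 u - c1 v) + (c1 v - c1 w)) by ring.
  replace (c2 u - c2 w) with ((c2 u - c2 v) + (c2 v - c2 w)) by ring.
  replace (c3 u - c3 w) with ((c3 u - c3 v) + (c3 v - c3 w)) by ring.
  replace (c4 u - c4 w) with ((c4 u - c4 v) + (c4 v - c4 w)) by ring.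
  apply minkowski4.
Qed.

Lemma dX_sym a b : dX a b = dX b a.
Proof. unfold dX. rewrite !dist4_sq4. unfold sq4. f_equal. ring. Qed.

Lemma dX_refl a : dX a a = 0.
Proof. unfold dX. rewrite dist4_sq4. unfold sq4. rewrite <- sqrt_0. f_equal. ring. Qed.

Lemma dX_ge0 a b : 0 <= dX a b.
Proof. unfold dX. rewrite dist4_sq4. apply sqrt_pos. Qed.

Lemma dX_sq a b : dX a b ^ 2 = sq4 (embX a) (embX b).
Proof. unfold dX. rewrite dist4_sq4, <- Rsqr_pow2. apply Rsqr_sqrt, sq4_ge0. Qed.

Lemma dX_triangle4 a b c d : dX a d <= dX a b + dX b c + dX c d.
Proof. pose proof (dX_triangle a b d). pose proof (dX_triangle b c d). lra. Qed.

Lemma sq4_stereo x y t x' y' t' :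
  sq4 (stereo x y t) (stereo x' y' t') =
  4 * ((x-x')^2 + (y-y')^2 + (t-t')^2) / ((x^2+y^2+t^2+1) * (x'^2+y'^2+t'^2+1)).
Proof.
  unfold sq4, stereo, c1, c2, c3, c4; cbn [fst snd].
  assert (0 < x^2+y^2+t^2+1) by (add_sq_nonneg; lra).
  assert (0 < x'^2+y'^2+t'^2+1) by (add_sq_nonneg; lra).
  field. lra.
Qed.

Lemma sq4_stereo_inf x y t : sq4 (stereo x y t) (0, 0, 0, 1) = 4 / (x^2+y^2+t^2+1).
Proof.
  unfold sq4, stereo, c1, c2, c3, c4; cbn [fst snd].
  assert (0 < x^2+y^2+t^2+1) by (add_sq_nonneg; lra).
  field. lra.
Qed.

Lemma dX_inl_sq p q :
  dX (inl p) (inl q) ^ 2 = 2 * (cosh_hd p q - 1) / (cosh_hd origin p * cosh_hd origin q).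
Proof.
  rewrite dX_sq. simpl embX. rewrite sq4_stereo, !cosh_hd_origin. unfold cosh_hd.
  pose proof (ht_pos p). pose proof (ht_pos q).
  assert (0 < hx p ^2 + hy p ^2 + ht p ^2 + 1) by (add_sq_nonneg; lra).
  assert (0 < hx q ^2 + hy q ^2 + ht q ^2 + 1) by (add_sq_nonneg; lra).
  field. repeat split; lra.
Qed.

Lemma dX_inl_le_coord p q :
  dX (inl p) (inl q) ^2 <= 4 * ((hx p - hx q)^2 + (hy p - hy q)^2 + (ht p - ht q)^2).
Proof.
  rewrite dX_sq. cbn [embX]. rewrite sq4_stereo.
  set (N := (hx p - hx q)^2 + (hy p - hy q)^2 + (ht p - ht q)^2).
  assert (0 <= N) by (unfold N; add_sq_nonneg; lra).
  assert (1 <= hx p ^2 + hy p ^2 + ht p ^2 + 1) by (add_sq_nonneg; lra).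
  assert (1 <= hx q ^2 + hy q ^2 + ht q ^2 + 1) by (add_sq_nonneg; lra).
  set (A := hx p ^2 + hy p ^2 + ht p ^2 + 1) in *.
  set (B := hx q ^2 + hy q ^2 + ht q ^2 + 1) in *.
  clearbody N A B. unfold Rdiv.
  assert (0 < / (A * B) <= 1).
  { split; [apply Rinv_0_lt_compat; nra|].
    rewrite <- Rinv_1. apply Rinv_le_contravar; nra. }
  nra.
Qed.

Definition height (a : X) : R := c3 (embX a).

Lemma embX_sphere a :
  c1 (embX a) ^ 2 + c2 (embX a) ^ 2 + c3 (embX a) ^ 2 + c4 (embX a) ^ 2 = 1 /\ 0 <= height a.
Proof.
  assert (Hs : forall x y t, 0 <= t ->
     c1 (stereo x y t) ^ 2 + c2 (stereo x y t) ^ 2 + c3 (stereo x y t) ^ 2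
     + c4 (stereo x y t) ^ 2 = 1 /\ 0 <= c3 (stereo x y t)).
  { intros x y t Ht. unfold stereo, c1, c2, c3, c4; cbn [fst snd].
    assert (0 < x^2+y^2+t^2+1) by (add_sq_nonneg; lra).
    split; [field; lra|apply Rdiv_nonneg; lra]. }
  unfold height. destruct a as [p|[x y|]]; cbn [embX].
  - apply Hs. pose proof (ht_pos p); lra.
  - apply Hs. lra.
  - unfold c1, c2, c3, c4; cbn [fst snd]. split; [ring|lra].
Qed.

Lemma dX_le2 a b : dX a b <= 2.
Proof.
  apply pow2_le_reg; [apply dX_ge0|lra|].
  rewrite dX_sq. unfold sq4.
  destruct (embX_sphere a) as [Ha _], (embX_sphere b) as [Hb _].
  set (a1 := c1 (embX a)) in *. set (a2 := c2 (embX a)) in *.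
  set (a3 := c3 (embX a)) in *. set (a4 := c4 (embX a)) in *.
  set (b1 := c1 (embX b)) in *. set (b2 := c2 (embX b)) in *.
  set (b3 := c3 (embX b)) in *. set (b4 := c4 (embX b)) in *.
  assert (0 <= (a1+b1)^2 + (a2+b2)^2 + (a3+b3)^2 + (a4+b4)^2) by (add_sq_nonneg; lra).
  nra.
Qed.

Lemma height_inl p : height (inl p) = / cosh_hd origin p.
Proof.
  unfold height, c3. cbn [embX stereo fst snd]. rewrite cosh_hd_origin. pose proof (ht_pos p).
  assert (0 < hx p ^2 + hy p ^2 + ht p ^2 + 1) by (add_sq_nonneg; lra). field. lra.
Qed.

Lemma height_inr z : height (inr z) = 0.
Proof.
  destruct z; unfold height, c3; cbn [embX stereo fst snd]; [unfold Rdiv; ring|reflexivity].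
Qed.

Lemma height_inl_pos p : 0 < height (inl p).
Proof. rewrite height_inl. apply Rinv_0_lt_compat. pose proof (cosh_hd_ge1 origin p). lra. Qed.

Lemma height_lipschitz a b : Rabs (height a - height b) <= dX a b.
Proof.
  apply pow2_le_reg; [apply Rabs_pos|apply dX_ge0|].
  rewrite dX_sq, pow2_abs. unfold sq4, height. add_sq_nonneg. lra.
Qed.

Lemma stereo_inj x y t x' y' t' :
  stereo x y t = stereo x' y' t' -> x = x' /\ y = y' /\ t = t'.
Proof.
  intro E. assert (H : sq4 (stereo x y t) (stereo x' y' t') = 0)
    by (rewrite E; unfold sq4; ring).
  rewrite sq4_stereo in H.
  assert (0 < x^2+y^2+t^2+1) by (add_sq_nonneg; lra).
  assert (0 < x'^2+y'^2+t'^2+1) by (add_sq_nonneg; lra).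
  assert (H' : (x-x')^2 + (y-y')^2 + (t-t')^2 = 0).
  { apply Rmult_integral in H as [H|H]; [lra|].
    exfalso. revert H. apply Rinv_neq_0_compat. nra. }
  apply sum_sq3_eq0 in H'. lra.
Qed.

Lemma stereo_neq_inf x y t : stereo x y t <> (0, 0, 0, 1).
Proof.
  intro E. assert (H : sq4 (stereo x y t) (0, 0, 0, 1) = 0)
    by (rewrite E; unfold sq4; ring).
  rewrite sq4_stereo_inf in H. assert (0 < x^2+y^2+t^2+1) by (add_sq_nonneg; lra).
  apply Rmult_integral in H as [H|H]; [lra|]. revert H. apply Rinv_neq_0_compat. lra.
Qed.

Lemma embX_inj a b : embX a = embX b -> a = b.
Proof.
  destruct a as [p|[x y|]], b as [q|[x' y'|]]; cbn [embX]; intro E;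
    try solve [exfalso; eapply stereo_neq_inf; eauto | reflexivity].
  - apply stereo_inj in E as (? & ? & ?). f_equal. apply H3_ext; assumption.
  - apply stereo_inj in E. pose proof (ht_pos p). lra.
  - apply stereo_inj in E. pose proof (ht_pos q). lra.
  - apply stereo_inj in E as (-> & -> & _). reflexivity.
Qed.

Lemma dX_eq0 a b : dX a b = 0 -> a = b.
Proof.
  intro H. apply embX_inj. pose proof (dX_sq a b) as E. rewrite H in E. unfold sq4 in E.
  assert (Hsq : forall x y : R, (x - y) ^ 2 = 0 -> x = y) by (intros; nra).
  destruct (embX a) as [[[a1 a2] a3] a4], (embX b) as [[[b1 b2] b3] b4].
  unfold c1, c2, c3, c4 in E; cbn [fst snd] in E.
  add_sq_nonneg. f_equal; [f_equal; [f_equal|]|]; apply Hsq; lra.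
Qed.

Lemma dX_eq_of_small a b : (forall e, 0 < e -> dX a b <= e) -> a = b.
Proof.
  intro H. apply dX_eq0. apply Rle_antisym; [|apply dX_ge0].
  apply Rle_plus_epsilon. intros e He. rewrite Rplus_0_l. auto.
Qed.

Lemma dX_fin_le p : dX (inl p) (inr (Fin (hx p) (hy p))) <= 2 * ht p.
Proof.
  pose proof (ht_pos p). apply pow2_le_reg; [apply dX_ge0|lra|].
  rewrite dX_sq. cbn [embX]. rewrite sq4_stereo.
  replace ((hx p - hx p) ^ 2 + (hy p - hy p) ^ 2 + (ht p - 0) ^ 2) with (ht p ^2) by ring.
  assert (1 <= hx p ^2 + hy p ^2 + ht p ^2 + 1) by (add_sq_nonneg; lra).
  assert (1 <= hx p ^2 + hy p ^2 + 0 ^2 + 1) by (add_sq_nonneg; lra).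
  apply (Rmult_le_reg_r ((hx p ^ 2 + hy p ^ 2 + ht p ^ 2 + 1) * (hx p ^ 2 + hy p ^ 2 + 0 ^ 2 + 1)));
    [nra|].
  unfold Rdiv. rewrite Rmult_assoc, Rinv_l by nra.
  assert (0 <= ht p ^2) by apply pow2_ge_0. nra.
Qed.

Lemma dX_inf_le p : dX (inl p) (inr Inf) <= 2 / ht p.
Proof.
  pose proof (ht_pos p). apply pow2_le_reg; [apply dX_ge0|apply Rdiv_nonneg; lra|].
  rewrite dX_sq. cbn [embX]. rewrite sq4_stereo_inf.
  assert (ht p ^2 <= hx p ^2 + hy p ^2 + ht p ^2 + 1) by (add_sq_nonneg; lra).
  assert (0 < ht p ^ 2) by (apply pow_lt; lra).
  unfold Rdiv. rewrite Rpow_mult_distr, pow_inv. replace (2^2) with 4 by ring.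
  apply Rmult_le_compat_l; [lra|]. apply Rinv_le_contravar; lra.
Qed.

Lemma exists_inl_near (a : X) (d : R) : 0 < d -> exists p, dX a (inl p) < d.
Proof.
  intro Hd. destruct a as [p|[x y|]].
  - exists p. rewrite dX_refl. assumption.
  - assert (Ht : 0 < d / 4) by lra. exists (mkH3 x y (d / 4) Ht).
    rewrite dX_sym. eapply Rle_lt_trans; [apply (dX_fin_le (mkH3 x y (d / 4) Ht))|]. simpl. lra.
  - assert (Ht : 0 < 4 / d) by (apply Rdiv_lt_0_compat; lra). exists (mkH3 0 0 (4 / d) Ht).
    rewrite dX_sym. eapply Rle_lt_trans; [apply (dX_inf_le (mkH3 0 0 (4 / d) Ht))|]. simpl.
    replace (2 / (4 / d)) with (d / 2) by (field; lra). lra.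
Qed.

Lemma embX_onto_hemisphere w1 w2 w3 w4 : w1^2 + w2^2 + w3^2 + w4^2 = 1 -> 0 <= w3 ->
  exists a, embX a = (w1, w2, w3, w4).
Proof.
  intros Hs Hw3.
  destruct (Req_dec w4 1) as [E|E].
  - subst w4. exists (inr Inf). cbn [embX].
    assert (w1^2 + w2^2 + w3^2 = 0) as Z by lra. apply sum_sq3_eq0 in Z as (-> & -> & ->).
    reflexivity.
  - assert (w4 < 1) by (add_sq_nonneg; nra).
    set (x := w1 / (1 - w4)). set (y := w2 / (1 - w4)). set (t := w3 / (1 - w4)).
    assert (Hn : x^2 + y^2 + t^2 = (1 + w4) / (1 - w4)).
    { unfold x, y, t.
      replace ((w1 / (1 - w4)) ^ 2 + (w2 / (1 - w4)) ^ 2 + (w3 / (1 - w4)) ^ 2)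
        with ((w1^2 + w2^2 + w3^2) / (1 - w4)^2) by (field; lra).
      replace (w1^2 + w2^2 + w3^2) with ((1 - w4) * (1 + w4)) by lra. field. lra. }
    assert (Hst : stereo x y t = (w1, w2, w3, w4)).
    { unfold stereo. rewrite Hn. unfold x, y, t. f_equal; [f_equal; [f_equal|]|]; field; lra. }
    destruct Hw3 as [Hw3|Hw3].
    + assert (Ht : 0 < t) by (unfold t; apply Rdiv_lt_0_compat; lra).
      exists (inl (mkH3 x y t Ht)). exact Hst.
    + exists (inr (Fin x y)). cbn [embX].
      replace 0 with t by (unfold t; rewrite <- Hw3; unfold Rdiv; ring). exact Hst.
Qed.

(** * Sequential compactness of the compactification *)

Definition increasing (phi : nat -> nat) : Prop := forall k, (phi k < phi (S k))%nat.

Lemma increasing_lt phi : increasing phi -> forall m n, (m < n)%nat -> (phi m < phi n)%nat.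
Proof. intros H m n Hmn. induction Hmn; [apply H|]. specialize (H m0). lia. Qed.

Lemma increasing_ge phi : increasing phi -> forall k, (k <= phi k)%nat.
Proof. intros H k. induction k; [lia|]. specialize (H k). lia. Qed.

Lemma increasing_comp phi psi : increasing phi -> increasing psi ->
  increasing (fun k => phi (psi k)).
Proof. intros H1 H2 k. apply increasing_lt; auto. Qed.

Lemma Un_cv_subseq (v : nat -> R) l phi : Un_cv v l -> increasing phi ->
  Un_cv (fun k => v (phi k)) l.
Proof.
  intros H Hp e He. destruct (H e He) as [N HN]. exists N. intros n Hn. apply HN.
  pose proof (increasing_ge phi Hp n). lia.
Qed.

Lemma Un_cv_const c : Un_cv (fun _ => c) c.
Proof.
  intros e He. exists 0%nat. intros. unfold Rdist. rewrite Rminus_diag, Rabs_R0. assumption.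
Qed.

Lemma Rinv_INR_S_lt e : 0 < e -> exists N, forall n, (N <= n)%nat -> / INR (S n) < e.
Proof.
  intro He. destruct (archimed_cor1 e He) as [N [HN HN0]]. exists N. intros n Hn.
  eapply Rle_lt_trans; [|exact HN]. apply Rinv_le_contravar; [apply lt_0_INR; lia|].
  apply le_INR. lia.
Qed.

Lemma bounded_seq_cv_subseq (v : nat -> R) (B : R) : (forall n, Rabs (v n) <= B) ->
  exists phi l, increasing phi /\ Un_cv (fun k => v (phi k)) l.
Proof.
  intro HB.
  destruct (Bolzano_Weierstrass v (fun c => -B <= c <= B) (compact_P3 (-B) B)) as [l Hl].
  { intro n. specialize (HB n). pose proof (Rle_abs (v n)). pose proof (Rle_abs (- v n)).
    rewrite Rabs_Ropp in *. lra. }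
  assert (G : forall N k, exists p, (N <= p)%nat /\ Rabs (v p - l) < / INR (S k)).
  { intros N k. assert (Hpos : 0 < / INR (S k)) by (apply Rinv_0_lt_compat, lt_0_INR; lia).
    destruct (Hl (disc l (mkposreal _ Hpos)) N) as [p [Hp1 Hp2]].
    - exists (mkposreal _ Hpos). intros y Hy. exact Hy.
    - exists p. split; assumption. }
  destruct (choice (fun Nk p => (fst Nk <= p)%nat /\ Rabs (v p - l) < / INR (S (snd Nk))))
    as [g Hg]; [intros [N k]; apply G|].
  set (phi := fix phi k := match k with 0 => g (0, 0)%nat | S k' => g (S (phi k'), k) end).
  exists phi, l. split.
  - intro k. simpl. destruct (Hg (S (phi k), S k)). simpl in *. lia.
  - intros e He. destruct (Rinv_INR_S_lt e He) as [N HN]. exists N. intros n Hn.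
    assert (Hphi : Rabs (v (phi n) - l) < / INR (S n)) by (destruct n; apply Hg).
    unfold Rdist. specialize (HN n Hn). lra.
Qed.

Definition cv4 (w : nat -> R * R * R * R) (l : R * R * R * R) : Prop :=
  Un_cv (fun n => c1 (w n)) (c1 l) /\ Un_cv (fun n => c2 (w n)) (c2 l) /\
  Un_cv (fun n => c3 (w n)) (c3 l) /\ Un_cv (fun n => c4 (w n)) (c4 l).

Lemma bounded_seq4_cv_subseq (w : nat -> R * R * R * R) :
  (forall n, Rabs (c1 (w n)) <= 1 /\ Rabs (c2 (w n)) <= 1 /\
             Rabs (c3 (w n)) <= 1 /\ Rabs (c4 (w n)) <= 1) ->
  exists phi l, increasing phi /\ cv4 (fun k => w (phi k)) l.
Proof.
  intro HB.
  destruct (bounded_seq_cv_subseq (fun n => c1 (w n)) 1) as [p1 [l1 [Hp1 H1]]];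
    [intro; apply HB|].
  destruct (bounded_seq_cv_subseq (fun n => c2 (w (p1 n))) 1) as [p2 [l2 [Hp2 H2]]];
    [intro; apply HB|].
  destruct (bounded_seq_cv_subseq (fun n => c3 (w (p1 (p2 n)))) 1) as [p3 [l3 [Hp3 H3]]];
    [intro; apply HB|].
  destruct (bounded_seq_cv_subseq (fun n => c4 (w (p1 (p2 (p3 n))))) 1) as [p4 [l4 [Hp4 H4]]];
    [intro; apply HB|].
  exists (fun k => p1 (p2 (p3 (p4 k)))), (l1, l2, l3, l4).
  assert (H234 : increasing (fun k => p2 (p3 (p4 k))))
    by (do 2 (apply increasing_comp; [assumption|]); assumption).
  split; [apply increasing_comp; assumption|].
  split; [|split; [|split]].
  - apply (Un_cv_subseq (fun k => c1 (w (p1 k))) l1 (fun k => p2 (p3 (p4 k)))); assumption.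
  - apply (Un_cv_subseq (fun k => c2 (w (p1 (p2 k)))) l2 (fun k => p3 (p4 k))); [exact H2|].
    apply increasing_comp; assumption.
  - apply (Un_cv_subseq (fun k => c3 (w (p1 (p2 (p3 k))))) l3 p4); assumption.
  - exact H4.
Qed.

Definition cvX (u : nat -> X) (l : X) : Prop :=
  forall e, 0 < e -> exists N, forall n, (N <= n)%nat -> dX (u n) l < e.

Lemma cvX_of_cv4 (u : nat -> X) l : cv4 (fun n => embX (u n)) (embX l) -> cvX u l.
Proof.
  intros (G1 & G2 & G3 & G4) e He. assert (He4 : 0 < e / 4) by lra.
  destruct (G1 _ He4) as [N1 HN1], (G2 _ He4) as [N2 HN2],
    (G3 _ He4) as [N3 HN3], (G4 _ He4) as [N4 HN4].
  exists (N1 + N2 + N3 + N4)%nat. intros n Hn.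
  specialize (HN1 n ltac:(lia)). specialize (HN2 n ltac:(lia)).
  specialize (HN3 n ltac:(lia)). specialize (HN4 n ltac:(lia)). unfold Rdist in *.
  apply pow2_lt_reg; [apply dX_ge0|lra|]. rewrite dX_sq. unfold sq4.
  apply pow2_lt_of_Rabs_lt in HN1, HN2, HN3, HN4.
  assert ((e / 4) ^ 2 = e ^ 2 / 16) by field. assert (0 < e ^ 2) by (apply pow_lt; lra). lra.
Qed.

Lemma embX_coord_bound a :
  Rabs (c1 (embX a)) <= 1 /\ Rabs (c2 (embX a)) <= 1 /\
  Rabs (c3 (embX a)) <= 1 /\ Rabs (c4 (embX a)) <= 1.
Proof.
  destruct (embX_sphere a) as [Hs _].
  repeat split; (apply pow2_le_reg; [apply Rabs_pos|lra|]); rewrite pow2_abs;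
    add_sq_nonneg; lra.
Qed.

Lemma X_seq_compact (u : nat -> X) : exists phi l, increasing phi /\ cvX (fun k => u (phi k)) l.
Proof.
  destruct (bounded_seq4_cv_subseq (fun n => embX (u n))) as [psi [[[[w1 w2] w3] w4] [Hpsi Hw]]].
  { intro. apply embX_coord_bound. }
  assert (Hsphere : w1^2 + w2^2 + w3^2 + w4^2 = 1).
  { destruct Hw as (G1 & G2 & G3 & G4).
    assert (Hc : forall (v : nat -> R) l, Un_cv v l -> Un_cv (fun n => v n ^ 2) (l ^ 2)).
    { intros v l Hv. apply (Un_cv_ext (fun n => v n * v n)); [intro; ring|].
      replace (l ^ 2) with (l * l) by ring. apply CV_mult; assumption. }
    apply (UL_sequence (fun k => c1 (embX (u (psi k)))^2 + c2 (embX (u (psi k)))^2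
                               + c3 (embX (u (psi k)))^2 + c4 (embX (u (psi k)))^2)).
    - repeat apply CV_plus; apply Hc; assumption.
    - apply (Un_cv_ext (fun _ => 1)); [|apply Un_cv_const].
      intro. symmetry. apply (proj1 (embX_sphere _)). }
  assert (Hw3 : 0 <= w3).
  { apply (@Rle_cv_lim (fun _ => 0) (fun k => c3 (embX (u (psi k)))) 0 w3); [|apply Un_cv_const|].
    - intro. apply embX_sphere.
    - apply Hw. }
  destruct (embX_onto_hemisphere w1 w2 w3 w4 Hsphere Hw3) as [l Hl].
  exists psi, l. split; [exact Hpsi|]. apply cvX_of_cv4. rewrite Hl. exact Hw.
Qed.

Lemma X_cauchy_cv (u : nat -> X) :
  (forall e, 0 < e -> exists N, forall m n, (N <= m)%nat -> (N <= n)%nat -> dX (u m) (u n) < e) ->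
  exists l, cvX u l.
Proof.
  intro Hc. destruct (X_seq_compact u) as [phi [l [Hp Hl]]]. exists l.
  intros e He. destruct (Hc (e / 2) ltac:(lra)) as [N HN], (Hl (e / 2) ltac:(lra)) as [N' HN'].
  exists (N + N')%nat. intros n Hn.
  specialize (HN' (N + N')%nat ltac:(lia)).
  pose proof (increasing_ge phi Hp (N + N')%nat).
  specialize (HN n (phi (N + N')%nat) ltac:(lia) ltac:(lia)).
  pose proof (dX_triangle (u n) (u (phi (N + N')%nat)) l). lra.
Qed.

Lemma continuousX_uniform (J : X -> X) : continuousX J ->
  forall e, 0 < e -> exists d, 0 < d /\ forall a b, dX a b < d -> dX (J a) (J b) < e.
Proof.
  intros HJ e He. apply NNPP. intro Hn.
  assert (Hs : forall n : nat, exists ab : X * X,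
    dX (fst ab) (snd ab) < / INR (S n) /\ e <= dX (J (fst ab)) (J (snd ab))).
  { intro n. apply NNPP. intro Hn2. apply Hn. exists (/ INR (S n)).
    split; [apply Rinv_0_lt_compat, lt_0_INR; lia|].
    intros a b Hab. apply Rnot_le_lt. intro Hle. apply Hn2. exists (a, b). auto. }
  destruct (choice _ Hs) as [g Hg].
  destruct (X_seq_compact (fun n => fst (g n))) as [phi [l [Hp Hl]]].
  destruct (HJ l (e / 2) ltac:(lra)) as [d [Hd Hdd]].
  destruct (Hl (d / 2) ltac:(lra)) as [N1 HN1], (Rinv_INR_S_lt (d / 2) ltac:(lra)) as [N2 HN2].
  set (k := (N1 + N2)%nat).
  specialize (HN1 k ltac:(unfold k; lia)).
  pose proof (increasing_ge phi Hp k).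
  specialize (HN2 (phi k) ltac:(unfold k in *; lia)).
  destruct (Hg (phi k)) as [G1 G2].
  set (a := fst (g (phi k))) in *. set (b := snd (g (phi k))) in *.
  rewrite dX_sym in HN1.
  pose proof (dX_triangle l a b).
  pose proof (Hdd a ltac:(lra)). pose proof (Hdd b ltac:(lra)).
  pose proof (dX_triangle (J a) (J l) (J b)). rewrite (dX_sym (J a) (J l)) in *. lra.
Qed.

(* A countable dense subset of [X]: the points of H^3 with coordinates in the grids
   (1/(m+1)) Z x (1/(m+1)) Z x (1/(m+1)) Z_{>0}, enumerated through Cantor's pairing. *)
Definition grid_point (m a1 a2 b1 b2 c : nat) : H3.
Proof.
  refine (mkH3 ((INR a1 - INR a2) / INR (S m)) ((INR b1 - INR b2) / INR (S m))
     ((INR c + 1) / INR (S m)) _).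
  apply Rdiv_lt_0_compat; [pose proof (pos_INR c); lra|apply lt_0_INR; lia].
Defined.

Definition dense_seq (n : nat) : X :=
  let '(m, r1) := of_nat n in let '(a1, r2) := of_nat r1 in let '(a2, r3) := of_nat r2 in
  let '(b1, r4) := of_nat r3 in let '(b2, c) := of_nat r4 in inl (grid_point m a1 a2 b1 b2 c).

Lemma dense_seq_grid m a1 a2 b1 b2 c :
  dense_seq (to_nat (m, to_nat (a1, to_nat (a2, to_nat (b1, to_nat (b2, c))))))
  = inl (grid_point m a1 a2 b1 b2 c).
Proof. unfold dense_seq. rewrite !cancel_of_to. reflexivity. Qed.

Lemma up_div_approx r M : 0 < M -> Rabs (r - IZR (up (r * M)) / M) <= / M.
Proof.
  intro HM. destruct (archimed (r * M)) as [H1 H2].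
  replace (r - IZR (up (r * M)) / M) with (- ((IZR (up (r * M)) - r * M) / M)) by (field; lra).
  rewrite Rabs_Ropp, Rabs_pos_eq by (apply Rdiv_nonneg; lra).
  unfold Rdiv. rewrite <- (Rmult_1_l (/ M)) at 2.
  apply Rmult_le_compat_r; [left; apply Rinv_0_lt_compat|]; lra.
Qed.

Lemma nat_diff_approx r M : 0 < M -> exists a1 a2 : nat, Rabs (r - (INR a1 - INR a2) / M) <= / M.
Proof.
  intro HM. exists (Z.to_nat (up (r * M))), (Z.to_nat (- up (r * M))).
  replace (INR (Z.to_nat (up (r * M))) - INR (Z.to_nat (- up (r * M)))) with (IZR (up (r * M))).
  - apply up_div_approx, HM.
  - rewrite !INR_IZR_INZ, !ZifyInst.of_nat_to_nat_eq, <- minus_IZR. f_equal. lia.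
Qed.

Lemma nat_succ_approx r M : 0 < M -> 0 < r -> exists c : nat, Rabs (r - (INR c + 1) / M) <= / M.
Proof.
  intros HM Hr. destruct (archimed (r * M)) as [H1 _].
  assert (Hz : (1 <= up (r * M))%Z).
  { assert (Hpos : 0 < IZR (up (r * M))) by nra. apply lt_IZR in Hpos. lia. }
  exists (Z.to_nat (up (r * M)) - 1)%nat.
  replace (INR (Z.to_nat (up (r * M)) - 1) + 1) with (IZR (up (r * M))).
  - apply up_div_approx, HM.
  - rewrite minus_INR by lia. rewrite INR_IZR_INZ, Z2Nat.id by lia. simpl. ring.
Qed.

Lemma dense_seq_dense (a : X) (d : R) : 0 < d -> exists i, dX a (dense_seq i) < d.
Proof.
  intro Hd. destruct (exists_inl_near a (d / 2) ltac:(lra)) as [p Hp].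
  destruct (Rinv_INR_S_lt (d / 8) ltac:(lra)) as [m Hm]. specialize (Hm m (le_n _)).
  set (M := INR (S m)) in *. assert (HM : 0 < M) by (apply lt_0_INR; lia).
  destruct (nat_diff_approx (hx p) M HM) as [a1 [a2 Ha]].
  destruct (nat_diff_approx (hy p) M HM) as [b1 [b2 Hb]].
  destruct (nat_succ_approx (ht p) M HM (ht_pos p)) as [c Hc].
  exists (to_nat (m, to_nat (a1, to_nat (a2, to_nat (b1, to_nat (b2, c)))))).
  rewrite dense_seq_grid.
  assert (Hq : dX (inl p) (inl (grid_point m a1 a2 b1 b2 c)) < d / 2).
  { apply pow2_lt_reg; [apply dX_ge0|lra|].
    eapply Rle_lt_trans; [apply dX_inl_le_coord|]. cbn [grid_point hx hy ht]. fold M.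
    apply pow2_le_of_Rabs_le in Ha, Hb, Hc.
    assert (0 < / M) by (apply Rinv_0_lt_compat; assumption).
    assert ((/ M) ^ 2 < (d / 8) ^ 2) by nra.
    nra. }
  pose proof (dX_triangle a (inl p) (inl (grid_point m a1 a2 b1 b2 c))). lra.
Qed.

Lemma X_totally_bounded e : 0 < e ->
  exists N, forall a, exists i, (i < N)%nat /\ dX a (dense_seq i) < e.
Proof.
  intro He. apply NNPP. intro Hn.
  assert (Hs : forall N, exists a, forall i, (i < N)%nat -> e <= dX a (dense_seq i)).
  { intro N. apply NNPP. intro H1. apply Hn. exists N. intro a. apply NNPP. intro H2. apply H1.
    exists a. intros i Hi. apply Rnot_lt_le. intro H3. apply H2. exists i. auto. }
  destruct (choice _ Hs) as [g Hg].
  destruct (X_seq_compact g) as [phi [l [Hp Hl]]].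
  destruct (dense_seq_dense l (e / 2) ltac:(lra)) as [j Hj].
  destruct (Hl (e / 2) ltac:(lra)) as [N HN].
  specialize (HN (N + S j)%nat ltac:(lia)).
  pose proof (increasing_ge phi Hp (N + S j)%nat).
  specialize (Hg (phi (N + S j)%nat) j ltac:(lia)).
  pose proof (dX_triangle (g (phi (N + S j)%nat)) l (dense_seq j)). lra.
Qed.

(** * Arzela-Ascoli for uniformly Lipschitz self-maps of the compactification *)

Definition cvX_unif (f : nat -> X -> X) (F : X -> X) : Prop :=
  forall e, 0 < e -> exists N, forall k, (N <= k)%nat -> forall a, dX (f k a) (F a) < e.

Lemma diagonal_subseq (v : nat -> nat -> X) :
  exists phi, increasing phi /\ forall i, exists l, cvX (fun k => v i (phi k)) l.
Proof.
  destruct (choice (fun (ip : nat * (nat -> nat)) sg =>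
      increasing sg /\ exists l, cvX (fun k => v (fst ip) (snd ip (sg k))) l)) as [sel Hsel].
  { intros [i psi]. destruct (X_seq_compact (fun k => v i (psi k))) as [sg [l [H1 H2]]].
    exists sg. split; [|exists l]; assumption. }
  set (Psi := fix Psi (i : nat) : nat -> nat := match i with
        | O => sel (O, fun k => k)
        | S i' => fun k => Psi i' (sel (i, Psi i') k) end).
  assert (Psi_incr : forall i, increasing (Psi i)).
  { induction i; simpl; [apply (Hsel (O, fun k => k))|].
    apply increasing_comp; [assumption|apply (Hsel (S i, Psi i))]. }
  assert (Psi_cv : forall i, exists l, cvX (fun k => v i (Psi i k)) l).
  { destruct i; [apply (Hsel (O, fun k => k))|apply (Hsel (S i, Psi i))]. }
  assert (Psi_tail : forall i j, (i <= j)%nat ->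
    forall k, exists m, (k <= m)%nat /\ Psi j k = Psi i m).
  { intros i j Hij. induction Hij; intro k; [exists k; auto|].
    destruct (IHHij (sel (S m, Psi m) k)) as [m' [Hm1 Hm2]].
    exists m'. split; [|exact Hm2].
    pose proof (increasing_ge _ (proj1 (Hsel (S m, Psi m))) k). lia. }
  exists (fun k => Psi k k). split.
  - intro k. simpl. apply (increasing_lt (Psi k) (Psi_incr k)).
    pose proof (increasing_ge _ (proj1 (Hsel (S k, Psi k))) (S k)). lia.
  - intro i. destruct (Psi_cv i) as [l Hl]. exists l. intros e He.
    destruct (Hl e He) as [N HN]. exists (N + i)%nat. intros k Hk.
    destruct (Psi_tail i k ltac:(lia) k) as [m [Hm1 ->]]. apply HN. lia.
Qed.

Section UniformlyLipschitz.

Variables (f : nat -> X -> X) (L : R).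
Hypothesis L_pos : 0 < L.
Hypothesis f_lipschitz : forall n a b, dX (f n a) (f n b) <= L * dX a b.

Lemma uniformly_cauchy_of_dense_cv :
  (forall i, exists l, cvX (fun n => f n (dense_seq i)) l) ->
  forall e, 0 < e -> exists K, forall k m, (K <= k)%nat -> (K <= m)%nat ->
    forall a, dX (f k a) (f m a) < e.
Proof.
  intros Hcv e He.
  assert (Hfin : forall N0, exists K, forall i, (i < N0)%nat -> forall k m,
      (K <= k)%nat -> (K <= m)%nat -> dX (f k (dense_seq i)) (f m (dense_seq i)) < e / 3).
  { induction N0 as [|N0 [K1 HK1]]; [exists 0%nat; intros; lia|].
    destruct (Hcv N0) as [l Hl]. destruct (Hl (e / 6) ltac:(lra)) as [K2 HK2].
    exists (K1 + K2)%nat. intros i Hi k m Hk Hm.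
    destruct (Nat.eq_dec i N0) as [->|Hne]; [|apply HK1; lia].
    pose proof (HK2 k ltac:(lia)). pose proof (HK2 m ltac:(lia)).
    pose proof (dX_triangle (f k (dense_seq N0)) l (f m (dense_seq N0))).
    rewrite (dX_sym l) in *. lra. }
  destruct (X_totally_bounded (e / (3 * L))) as [N0 HN0]; [apply Rdiv_lt_0_compat; lra|].
  destruct (Hfin N0) as [K HK]. exists K. intros k m Hk Hm a.
  destruct (HN0 a) as [i [Hi Hai]].
  assert (Hd : L * dX a (dense_seq i) < e / 3).
  { replace (e / 3) with (L * (e / (3 * L))) by (field; lra). apply Rmult_lt_compat_l; assumption. }
  pose proof (f_lipschitz k a (dense_seq i)). pose proof (f_lipschitz m (dense_seq i) a).
  rewrite (dX_sym (dense_seq i) a) in *.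
  pose proof (HK i Hi k m Hk Hm).
  pose proof (dX_triangle4 (f k a) (f k (dense_seq i)) (f m (dense_seq i)) (f m a)). lra.
Qed.

Lemma unif_limit_of_uniformly_cauchy :
  (forall e, 0 < e -> exists K, forall k m, (K <= k)%nat -> (K <= m)%nat ->
    forall a, dX (f k a) (f m a) < e) ->
  exists F, cvX_unif f F.
Proof.
  intro Hc. destruct (choice (fun a l => cvX (fun k => f k a) l)) as [F HF].
  { intro a. apply X_cauchy_cv. intros e He. destruct (Hc e He) as [K HK].
    exists K. intros. apply HK; assumption. }
  exists F. intros e He. destruct (Hc (e / 2) ltac:(lra)) as [K HK]. exists K. intros k Hk a.
  destruct (HF a (e / 2) ltac:(lra)) as [N HN].
  specialize (HN (K + N)%nat ltac:(lia)). specialize (HK k (K + N)%nat Hk ltac:(lia) a).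
  pose proof (dX_triangle (f k a) (f (K + N)%nat a) (F a)). lra.
Qed.

Lemma lipschitz_of_cvX_limit F : (forall a, cvX (fun n => f n a) (F a)) ->
  forall a b, dX (F a) (F b) <= L * dX a b.
Proof.
  intros Hcv a b. apply Rle_plus_epsilon. intros h Hh.
  destruct (Hcv a (h / 2) ltac:(lra)) as [Na HNa], (Hcv b (h / 2) ltac:(lra)) as [Nb HNb].
  specialize (HNa (Na + Nb)%nat ltac:(lia)). specialize (HNb (Na + Nb)%nat ltac:(lia)).
  pose proof (f_lipschitz (Na + Nb)%nat a b).
  pose proof (dX_triangle4 (F a) (f (Na + Nb)%nat a) (f (Na + Nb)%nat b) (F b)).
  rewrite (dX_sym (F a) (f (Na + Nb)%nat a)) in *. lra.
Qed.

End UniformlyLipschitz.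

Lemma cvX_of_unif f F : cvX_unif f F -> forall a, cvX (fun k => f k a) (F a).
Proof. intros Hu a e He. destruct (Hu e He) as [N HN]. exists N. auto. Qed.

Lemma arzela_ascoli_X (f : nat -> X -> X) (L : R) : 0 < L ->
  (forall n a b, dX (f n a) (f n b) <= L * dX a b) ->
  exists phi F, increasing phi /\ cvX_unif (fun k => f (phi k)) F.
Proof.
  intros HL Hf.
  destruct (diagonal_subseq (fun i n => f n (dense_seq i))) as [phi [Hphi Hcv]].
  destruct (unif_limit_of_uniformly_cauchy (fun k => f (phi k))) as [F HF].
  { apply (uniformly_cauchy_of_dense_cv (fun k => f (phi k)) L); auto. }
  exists phi, F. split; assumption.
Qed.

(** * Isometries and their limits *)

Lemma joinmap_comp G g G' g' u :
  joinmap (fun p => G (G' p)) (fun z => g (g' z)) u = joinmap G g (joinmap G' g' u).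
Proof. destruct u; reflexivity. Qed.

Lemma continuousX_comp (J1 J2 : X -> X) :
  continuousX J1 -> continuousX J2 -> continuousX (fun u => J1 (J2 u)).
Proof.
  intros H1 H2 u e He. destruct (H1 (J2 u) e He) as [d1 [Hd1 H1']].
  destruct (H2 u d1 Hd1) as [d2 [Hd2 H2']]. exists d2. split; auto.
Qed.

Lemma isom_comp G g G' g' : isom G g -> isom G' g' ->
  isom (fun p => G (G' p)) (fun z => g (g' z)).
Proof.
  intros [[Gi Gs] [Gh Gc]] [[Gi' Gs'] [Gh' Gc']]. split; [split|split].
  - intros p q E. apply Gi', Gi, E.
  - intro q. destruct (Gs q) as [r Hr]. destruct (Gs' r) as [p Hp]. exists p. congruence.
  - intros p q. rewrite Gh, Gh'. reflexivity.
  - intros u e He. destruct (continuousX_comp _ _ Gc Gc' u e He) as [d [Hd Hd']].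
    exists d. split; [assumption|]. intros b Hb.
    rewrite (joinmap_comp G g G' g' u), (joinmap_comp G g G' g' b). auto.
Qed.

Lemma continuousX_eq_of_inl (J1 J2 : X -> X) : continuousX J1 -> continuousX J2 ->
  (forall p, J1 (inl p) = J2 (inl p)) -> forall u, J1 u = J2 u.
Proof.
  intros H1 H2 E u. apply dX_eq_of_small. intros h Hh.
  destruct (H1 u (h / 2) ltac:(lra)) as [d1 [Hd1 H1']].
  destruct (H2 u (h / 2) ltac:(lra)) as [d2 [Hd2 H2']].
  destruct (exists_inl_near u (Rmin d1 d2) ltac:(apply Rmin_glb_lt; lra)) as [p Hp].
  pose proof (Rmin_l d1 d2). pose proof (Rmin_r d1 d2).
  specialize (H1' (inl p) ltac:(lra)). specialize (H2' (inl p) ltac:(lra)).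
  rewrite E in H1'. pose proof (dX_triangle (J1 u) (J2 (inl p)) (J2 u)).
  rewrite (dX_sym (J2 (inl p)) (J2 u)) in *. lra.
Qed.

Lemma lipschitz_of_inl (J : X -> X) (C : R) : 0 <= C -> continuousX J ->
  (forall p q, dX (J (inl p)) (J (inl q)) <= C * dX (inl p) (inl q)) ->
  forall a b, dX (J a) (J b) <= C * dX a b.
Proof.
  intros HC HJ Hin a b. apply Rle_plus_epsilon. intros h Hh.
  set (eta := h / (2 + 2 * C)). assert (Heta : 0 < eta) by (apply Rdiv_lt_0_compat; lra).
  destruct (HJ a eta Heta) as [da [Hda Ha]], (HJ b eta Heta) as [db [Hdb Hb]].
  destruct (exists_inl_near a (Rmin da eta) ltac:(apply Rmin_glb_lt; lra)) as [p Hp].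
  destruct (exists_inl_near b (Rmin db eta) ltac:(apply Rmin_glb_lt; lra)) as [q Hq].
  pose proof (Rmin_l da eta). pose proof (Rmin_r da eta).
  pose proof (Rmin_l db eta). pose proof (Rmin_r db eta).
  specialize (Ha (inl p) ltac:(lra)). specialize (Hb (inl q) ltac:(lra)).
  pose proof (Hin p q).
  pose proof (dX_triangle4 (J a) (J (inl p)) (J (inl q)) (J b)).
  pose proof (dX_triangle4 (inl p) a b (inl q)).
  rewrite (dX_sym (inl p) a), (dX_sym (J (inl q)) (J b)) in *.
  assert (C * dX (inl p) (inl q) <= C * (eta + dX a b + eta))
    by (apply Rmult_le_compat_l; lra).
  assert (h = eta * (2 + 2 * C)) by (unfold eta; field; lra).
  nra.
Qed.

(* By [dX_inl_sq], the chordal distance of [G p] and [G q] differs from that of [p] and [q]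
   only through the factors [cosh_hd origin], which [G] changes by at most [2 M]. *)
Lemma isom_lipschitz_inl G g M : isom G g -> cosh_hd origin (G origin) <= M ->
  forall p q, dX (inl (G p)) (inl (G q)) <= (2 * M) * dX (inl p) (inl q).
Proof.
  intros HG HM p q. pose proof (cosh_hd_ge1 origin (G origin)).
  apply pow2_le_reg; [apply dX_ge0|pose proof (dX_ge0 (inl p) (inl q)); nra|].
  rewrite Rpow_mult_distr, !dX_inl_sq, (isom_cosh_hd G g p q HG).
  assert (Hback : forall r, cosh_hd origin r <= 2 * M * cosh_hd origin (G r)).
  { intro r. rewrite <- (isom_cosh_hd G g origin r HG).
    pose proof (cosh_hd_triangle (G origin) origin (G r)). rewrite cosh_hd_sym in HM.
    pose proof (cosh_hd_ge1 origin (G r)). nra. }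
  pose proof (Hback p) as Lp. pose proof (Hback q) as Lq.
  pose proof (cosh_hd_ge1 p q). pose proof (cosh_hd_ge1 origin p).
  pose proof (cosh_hd_ge1 origin q).
  pose proof (cosh_hd_ge1 origin (G p)). pose proof (cosh_hd_ge1 origin (G q)).
  set (c := cosh_hd p q) in *. set (x := cosh_hd origin p) in *. set (y := cosh_hd origin q) in *.
  set (x' := cosh_hd origin (G p)) in *. set (y' := cosh_hd origin (G q)) in *.
  clearbody c x y x' y'.
  assert (Hxy : x * y <= (2 * M) ^ 2 * (x' * y')) by nra.
  apply (Rmult_le_reg_r (x * y * (x' * y'))); [repeat apply Rmult_lt_0_compat; lra|].
  replace (2 * (c - 1) / (x' * y') * (x * y * (x' * y'))) with (2 * (c - 1) * (x * y))
    by (field; lra).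
  replace ((2 * M) ^ 2 * (2 * (c - 1) / (x * y)) * (x * y * (x' * y')))
    with (2 * (c - 1) * ((2 * M) ^ 2 * (x' * y'))) by (field; lra).
  apply Rmult_le_compat_l; lra.
Qed.

Lemma isom_lipschitz G g M : isom G g -> cosh_hd origin (G origin) <= M ->
  forall a b, dX (joinmap G g a) (joinmap G g b) <= (2 * M) * dX a b.
Proof.
  intros HG HM. pose proof (cosh_hd_ge1 origin (G origin)).
  apply lipschitz_of_inl; [lra|apply HG|]. apply (isom_lipschitz_inl G g M HG HM).
Qed.

Lemma cvX_height u l : cvX u l -> Un_cv (fun k => height (u k)) (height l).
Proof.
  intros H e He. destruct (H e He) as [N HN]. exists N. intros n Hn.
  eapply Rle_lt_trans; [apply height_lipschitz|]. auto.
Qed.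

Lemma cvX_dX u v l m : cvX u l -> cvX v m -> Un_cv (fun k => dX (u k) (v k)) (dX l m).
Proof.
  intros H1 H2 e He.
  destruct (H1 (e / 2) ltac:(lra)) as [N1 HN1], (H2 (e / 2) ltac:(lra)) as [N2 HN2].
  exists (N1 + N2)%nat. intros n Hn. unfold Rdist.
  specialize (HN1 n ltac:(lia)). specialize (HN2 n ltac:(lia)).
  pose proof (dX_triangle4 (u n) l m (v n)). pose proof (dX_triangle4 l (u n) (v n) m).
  rewrite (dX_sym l (u n)), (dX_sym m (v n)) in *.
  apply Rabs_def1; lra.
Qed.

Lemma cvX_inl_bounded (B : nat -> H3) (C : R) l : cvX (fun k => inl (B k)) l ->
  (forall k, cosh_hd origin (B k) <= C) -> exists q, l = inl q /\ cosh_hd origin q <= C.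
Proof.
  intros Hl HC. pose proof (cosh_hd_ge1 origin (B 0%nat)). pose proof (HC 0%nat).
  assert (Hh : / C <= height l).
  { apply (@Rle_cv_lim (fun _ => / C) (fun k => height (inl (B k))));
      [|apply Un_cv_const|apply cvX_height, Hl].
    intro k. rewrite height_inl. apply Rinv_le_contravar; [|apply HC].
    pose proof (cosh_hd_ge1 origin (B k)). lra. }
  destruct l as [q|z]; [|rewrite height_inr in Hh; pose proof (Rinv_0_lt_compat C); lra].
  exists q. split; [reflexivity|]. rewrite height_inl in Hh.
  pose proof (cosh_hd_ge1 origin q). apply Rinv_le_contravar in Hh; [|apply Rinv_0_lt_compat; lra].
  rewrite !Rinv_inv in Hh. exact Hh.
Qed.

Lemma cvX_inr_limit (w : nat -> Sph) l : cvX (fun k => inr (w k)) l -> exists z, l = inr z.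
Proof.
  intro Hl. destruct l as [q|z]; [|exists z; reflexivity]. exfalso.
  pose proof (cvX_height _ _ Hl) as H. pose proof (height_inl_pos q).
  assert (height (inl q) = 0); [|lra].
  apply (UL_sequence (fun k => height (inr (w k)))); [assumption|].
  apply (Un_cv_ext (fun _ => 0)); [intro; rewrite height_inr; reflexivity|apply Un_cv_const].
Qed.

Section IsometrySequence.

Variables (A : nat -> H3 -> H3) (a : nat -> Sph -> Sph) (M : R).
Hypothesis A_isom : forall n, isom (A n) (a n).
Hypothesis A_origin : forall n, cosh_hd origin (A n origin) <= M.

Lemma isom_seq_limit_joinmap (F : X -> X) :
  (forall u, cvX (fun n => joinmap (A n) (a n) u) (F u)) ->
  exists A' a', forall u, F u = joinmap A' a' u.
Proof.
  intro Hcv.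
  destruct (choice (fun p q => F (inl p) = inl q)) as [A' HA'].
  { intro p. destruct (cvX_inl_bounded (fun n => A n p) (2 * M * cosh_hd origin p) (F (inl p)))
      as [q [Hq _]]; [apply (Hcv (inl p))| |exists q; exact Hq].
    intro n. apply (cosh_hd_origin_isom_le _ _ _ _ (A_isom n) (A_origin n)). }
  destruct (choice (fun z w => F (inr z) = inr w)) as [a' Ha'].
  { intro z. apply (cvX_inr_limit (fun n => a n z)), (Hcv (inr z)). }
  exists A', a'. intros [p|z]; [apply HA'|apply Ha'].
Qed.

Variables (A' : H3 -> H3) (a' : Sph -> Sph).
Hypothesis A_cv : forall u, cvX (fun n => joinmap (A n) (a n) u) (joinmap A' a' u).

Lemma isom_seq_limit_cosh_hd p q : cosh_hd (A' p) (A' q) = cosh_hd p q.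
Proof.
  assert (Hsq : forall r s, dX (inl r) (inl s) ^ 2
            = 2 * (cosh_hd r s - 1) * height (inl r) * height (inl s)).
  { intros r s. rewrite dX_inl_sq, !height_inl. pose proof (cosh_hd_ge1 origin r).
    pose proof (cosh_hd_ge1 origin s). field. lra. }
  assert (L1 : Un_cv (fun n => dX (inl (A n p)) (inl (A n q)) * dX (inl (A n p)) (inl (A n q)))
                 (dX (inl (A' p)) (inl (A' q)) * dX (inl (A' p)) (inl (A' q)))).
  { apply CV_mult; apply cvX_dX; apply (A_cv (inl _)). }
  assert (L2 : Un_cv (fun n => 2 * (cosh_hd p q - 1) * height (inl (A n p)) * height (inl (A n q)))
                 (2 * (cosh_hd p q - 1) * height (inl (A' p)) * height (inl (A' q)))).
  { apply CV_mult; [apply CV_mult; [apply Un_cv_const|]|]; apply cvX_height, (A_cv (inl _)). }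
  assert (E : dX (inl (A' p)) (inl (A' q)) * dX (inl (A' p)) (inl (A' q))
            = 2 * (cosh_hd p q - 1) * height (inl (A' p)) * height (inl (A' q))).
  { apply (UL_sequence _ _ _ L1). eapply Un_cv_ext; [|exact L2]. intro n.
    rewrite <- (isom_cosh_hd _ _ p q (A_isom n)), <- Hsq. ring. }
  replace (dX (inl (A' p)) (inl (A' q)) * dX (inl (A' p)) (inl (A' q)))
    with (dX (inl (A' p)) (inl (A' q)) ^ 2) in E by ring.
  rewrite Hsq in E.
  pose proof (height_inl_pos (A' p)). pose proof (height_inl_pos (A' q)).
  apply (Rmult_eq_reg_r (2 * height (inl (A' p)) * height (inl (A' q)))); [|nra].
  lra.
Qed.

Lemma isom_seq_limit_origin : cosh_hd origin (A' origin) <= M.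
Proof.
  destruct (cvX_inl_bounded (fun n => A n origin) M (inl (A' origin))) as [q [Hq HqM]];
    [apply (A_cv (inl origin))|exact A_origin|].
  injection Hq as ->. exact HqM.
Qed.

Lemma isom_seq_limit_surjective q : exists p, A' p = q.
Proof.
  destruct (choice (fun n b => A n b = q)) as [B HB];
    [intro n; apply (proj2 (proj1 (A_isom n)))|].
  assert (HBo : forall n, cosh_hd origin (B n) <= 2 * M * cosh_hd origin q).
  { intro n. rewrite <- (isom_cosh_hd _ _ origin (B n) (A_isom n)), HB.
    pose proof (cosh_hd_triangle (A n origin) origin q).
    rewrite (cosh_hd_sym (A n origin) origin) in *.
    pose proof (A_origin n). pose proof (cosh_hd_ge1 origin q).
    pose proof (cosh_hd_ge1 origin (A n origin)). nra. }
  destruct (X_seq_compact (fun n => inl (B n))) as [psi [l [Hpsi Hl]]].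
  destruct (cvX_inl_bounded (fun k => B (psi k)) _ l Hl (fun k => HBo (psi k)))
    as [p [-> _]].
  exists p. enough (E : inl (A' p) = inl q :> X) by (injection E; auto).
  apply dX_eq_of_small. intros h Hh.
  pose proof (cosh_hd_ge1 origin (A 0%nat origin)). pose proof (A_origin 0%nat).
  destruct (Hl (h / (4 * M))) as [N1 HN1]; [apply Rdiv_lt_0_compat; lra|].
  destruct (A_cv (inl p) (h / 2) ltac:(lra)) as [N2 HN2].
  set (k := (N1 + N2)%nat).
  specialize (HN1 k ltac:(unfold k; lia)). pose proof (increasing_ge psi Hpsi k).
  specialize (HN2 (psi k) ltac:(unfold k in *; lia)). cbn [joinmap] in HN2.
  pose proof (isom_lipschitz_inl _ _ M (A_isom (psi k)) (A_origin _) (B (psi k)) p) as Hlip.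
  rewrite HB in Hlip.
  pose proof (dX_triangle (inl (A' p)) (inl (A (psi k) p)) (inl q)).
  rewrite (dX_sym (inl (A' p))), (dX_sym (inl (A (psi k) p))) in *.
  assert (2 * M * dX (inl (B (psi k))) (inl p) <= h / 2).
  { replace (h / 2) with (2 * M * (h / (4 * M))) by (field; lra).
    apply Rmult_le_compat_l; lra. }
  lra.
Qed.

Lemma isom_seq_limit_isom : isom A' a'.
Proof.
  pose proof (cosh_hd_ge1 origin (A 0%nat origin)). pose proof (A_origin 0%nat).
  assert (Hlip : forall u v, dX (joinmap A' a' u) (joinmap A' a' v) <= 2 * M * dX u v).
  { apply (lipschitz_of_cvX_limit (fun n => joinmap (A n) (a n)) (2 * M)); [|exact A_cv].
    intro n. apply (isom_lipschitz _ _ M (A_isom n) (A_origin n)). }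
  split; [split|split].
  - intros p q E. apply cosh_hd_eq1. rewrite <- isom_seq_limit_cosh_hd, E. apply cosh_hd_refl.
  - exact isom_seq_limit_surjective.
  - intros p q. rewrite !hd_cosh_hd, isom_seq_limit_cosh_hd. reflexivity.
  - intros u e He. exists (e / (2 * M)). split; [apply Rdiv_lt_0_compat; lra|].
    intros v Hv. eapply Rle_lt_trans; [apply Hlip|].
    replace e with (2 * M * (e / (2 * M))) by (field; lra).
    apply Rmult_lt_compat_l; lra.
Qed.

End IsometrySequence.

Lemma isom_seq_subconverges (A : nat -> H3 -> H3) (a : nat -> Sph -> Sph) (M : R) :
  (forall n, isom (A n) (a n)) -> (forall n, cosh_hd origin (A n origin) <= M) ->
  exists phi A' a', increasing phi /\ isom A' a' /\ cosh_hd origin (A' origin) <= M /\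
    cvX_unif (fun k => joinmap (A (phi k)) (a (phi k))) (joinmap A' a').
Proof.
  intros HA HM. pose proof (cosh_hd_ge1 origin (A 0%nat origin)). pose proof (HM 0%nat).
  destruct (arzela_ascoli_X (fun n => joinmap (A n) (a n)) (2 * M)) as [phi [F [Hphi HF]]];
    [lra|intro n; apply (isom_lipschitz _ _ M (HA n) (HM n))|].
  pose proof (cvX_of_unif _ _ HF) as Hcv.
  destruct (isom_seq_limit_joinmap (fun k => A (phi k)) (fun k => a (phi k)) M
    (fun k => HA (phi k)) (fun k => HM (phi k)) F Hcv) as [A' [a' HFA]].
  assert (HcvA : forall u, cvX (fun k => joinmap (A (phi k)) (a (phi k)) u) (joinmap A' a' u)).
  { intro u. rewrite <- HFA. apply Hcv. }
  exists phi, A', a'. split; [|split; [|split]].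
  - exact Hphi.
  - exact (isom_seq_limit_isom _ _ M (fun k => HA (phi k)) (fun k => HM (phi k)) A' a' HcvA).
  - exact (isom_seq_limit_origin _ _ M (fun k => HM (phi k)) A' a' HcvA).
  - intros e He. destruct (HF e He) as [N HN]. exists N. intros k Hk u. rewrite <- HFA. auto.
Qed.

(** * Boundedness, and from the chordal metric back to [hd] and [dS] *)

Lemma compactH_bounded K : compactH K -> exists C, forall p, K p -> cosh_hd origin p <= C.
Proof.
  intro HK. apply NNPP. intro Hn.
  assert (Hs : forall n : nat, exists p, K p /\ INR n < cosh_hd origin p).
  { intro n. apply NNPP. intro H1. apply Hn. exists (INR n). intros p Kp.
    apply Rnot_lt_le. intro H2. apply H1. eauto. }
  destruct (choice _ Hs) as [u Hu].
  destruct (HK u (fun n => proj1 (Hu n))) as [phi [q [Hphi [_ Hcv]]]].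
  destruct (Hcv 1 ltac:(lra)) as [N HN].
  destruct (INR_archimed 1 (2 * cosh_hd origin q * exp 1)) as [m Hm]; [lra|].
  set (k := (N + m)%nat).
  specialize (HN k ltac:(unfold k; lia)).
  assert (Hk : (k <= phi k)%nat) by (apply increasing_ge; exact Hphi).
  assert (INR m <= INR (phi k)) by (apply le_INR; unfold k in *; lia).
  pose proof (proj2 (Hu (phi k))).
  pose proof (cosh_hd_le_exp (u (phi k)) q 1 ltac:(lra)).
  pose proof (cosh_hd_triangle origin q (u (phi k))). rewrite (cosh_hd_sym q) in *.
  pose proof (cosh_hd_ge1 origin q). pose proof (cosh_hd_ge1 (u (phi k)) q).
  nra.
Qed.

Lemma bilipschitz_cosh_hd_bounded (H : H3 -> H3) : bilipschitz_bijection H ->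
  forall C, exists C', forall p, cosh_hd origin p <= C -> cosh_hd origin (H p) <= C'.
Proof.
  intros [_ [L [HL HLL]]] C.
  set (r := L * ln (2 * Rmax C 1)).
  exists (2 * cosh_hd origin (H origin) * exp r). intros p Hp.
  assert (Hd : hd (H origin) (H p) <= r).
  { eapply Rle_trans; [apply (HLL origin p)|]. apply Rmult_le_compat_l; [lra|].
    eapply Rle_trans; [apply hd_le_ln_cosh_hd|].
    pose proof (cosh_hd_ge1 origin p). pose proof (Rmax_l C 1).
    destruct (Req_dec (cosh_hd origin p) (Rmax C 1)) as [E|E]; [rewrite E; lra|].
    left. apply ln_increasing; lra. }
  pose proof (cosh_hd_le_exp _ _ _ Hd).
  pose proof (cosh_hd_triangle origin (H origin) (H p)).
  pose proof (cosh_hd_ge1 origin (H origin)). pose proof (cosh_hd_ge1 (H origin) (H p)).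
  nra.
Qed.

Lemma cosh_hd_origin_compose_bounded (H : H3 -> H3) (M1 M2 C : R) : bilipschitz_bijection H ->
  exists C', forall A a B b p, isom A a -> isom B b ->
    cosh_hd origin (A origin) <= M1 -> cosh_hd origin (B origin) <= M2 ->
    cosh_hd origin p <= C -> cosh_hd origin (A (H (B p))) <= C'.
Proof.
  intro HH. destruct (bilipschitz_cosh_hd_bounded H HH (2 * M2 * C)) as [C' HC'].
  exists (2 * M1 * C'). intros A a B b p HA HB HAo HBo Hp.
  pose proof (cosh_hd_ge1 origin (B origin)).
  eapply Rle_trans; [apply (cosh_hd_origin_isom_le A a M1 _ HA HAo)|].
  apply Rmult_le_compat_l; [pose proof (cosh_hd_ge1 origin (A origin)); lra|].
  apply HC'. eapply Rle_trans; [apply (cosh_hd_origin_isom_le B b M2 _ HB HBo)|].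
  apply Rmult_le_compat_l; lra.
Qed.

Lemma hd_lt_of_dX p q C eps : 1 <= C -> cosh_hd origin p <= C -> cosh_hd origin q <= C ->
  0 < eps -> eps <= 1 -> dX (inl p) (inl q) < eps / (3 * C) -> hd p q < eps.
Proof.
  intros HC Hp Hq He He1 Hd. apply hd_lt_of_cosh_hd; [assumption..|].
  pose proof (dX_inl_sq p q) as E.
  pose proof (cosh_hd_ge1 origin p). pose proof (cosh_hd_ge1 origin q).
  replace (cosh_hd p q - 1)
    with (dX (inl p) (inl q) ^ 2 * (cosh_hd origin p * cosh_hd origin q) / 2)
    by (rewrite E; field; lra).
  pose proof (dX_ge0 (inl p) (inl q)).
  set (d := dX (inl p) (inl q)) in *. clearbody d.
  assert (d ^ 2 <= (eps / (3 * C)) ^ 2) by (apply pow_incr; lra).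
  assert (cosh_hd origin p * cosh_hd origin q <= C * C) by (apply Rmult_le_compat; lra).
  assert (d ^ 2 * (cosh_hd origin p * cosh_hd origin q) <= (eps / (3 * C)) ^ 2 * (C * C)).
  { apply Rmult_le_compat; [apply pow2_ge_0|nra|assumption..]. }
  assert ((eps / (3 * C)) ^ 2 * (C * C) = eps * eps / 9) by (field; lra).
  nra.
Qed.

Lemma dS_lt_of_dX e : 0 < e ->
  exists d, 0 < d /\ forall z w, dX (inr z) (inr w) < d -> dS z w < e.
Proof.
  intro He. set (y := Rmin (e / 4) 1).
  assert (Hy : 0 < y) by (apply Rmin_glb_lt; lra).
  assert (Hy1 : y <= 1) by apply Rmin_r. assert (Hye : y <= e / 4) by apply Rmin_l.
  pose proof PI2_1.
  exists (2 * sin y). split; [pose proof (sin_gt_0 y Hy ltac:(lra)); lra|].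
  intros z w Hzw. unfold dS.
  set (x := dX (inr z) (inr w) / 2).
  assert (Hx : 0 <= x <= 1)
    by (unfold x; pose proof (dX_ge0 (inr z) (inr w)); pose proof (dX_le2 (inr z) (inr w)); lra).
  assert (asin x < y); [|lra].
  apply Rnot_le_lt. intro Hle. pose proof (asin_bound x).
  assert (sin y <= x); [|unfold x in *; lra].
  rewrite <- (sin_asin x) by lra.
  destruct Hle as [Hlt|<-]; [|lra].
  left. apply sin_increasing_1; lra.
Qed.

Lemma cvX_unif_subseq f F psi : cvX_unif f F -> increasing psi ->
  cvX_unif (fun k => f (psi k)) F.
Proof.
  intros Hu Hpsi e He. destruct (Hu e He) as [N HN]. exists N. intros k Hk.
  apply HN. pose proof (increasing_ge psi Hpsi k). lia.
Qed.

Lemma cvX_unif_comp (A B : nat -> X -> X) (A' B' J : X -> X) (L : R) : 0 < L ->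
  cvX_unif A A' -> cvX_unif B B' -> (forall u v, dX (A' u) (A' v) <= L * dX u v) ->
  continuousX J -> cvX_unif (fun k u => A k (J (B k u))) (fun u => A' (J (B' u))).
Proof.
  intros HL HA HB HA' HJ e He.
  destruct (continuousX_uniform J HJ (e / (2 * L))) as [d [Hd HJd]];
    [apply Rdiv_lt_0_compat; lra|].
  destruct (HB d Hd) as [N2 HN2], (HA (e / 2) ltac:(lra)) as [N1 HN1].
  exists (N1 + N2)%nat. intros k Hk u.
  specialize (HJd _ _ (HN2 k ltac:(lia) u)).
  pose proof (HA' (J (B k u)) (J (B' u))).
  pose proof (HN1 k ltac:(lia) (J (B k u))).
  pose proof (dX_triangle (A k (J (B k u))) (A' (J (B k u))) (A' (J (B' u)))).
  assert (L * dX (J (B k u)) (J (B' u)) < e / 2).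
  { replace (e / 2) with (L * (e / (2 * L))) by (field; lra). apply Rmult_lt_compat_l; lra. }
  lra.
Qed.

Lemma cvX_unif_isom_compose (A B : nat -> H3 -> H3) (a b : nat -> Sph -> Sph)
    A' a' B' b' H h M :
  isom A' a' -> cosh_hd origin (A' origin) <= M -> continuousX (joinmap H h) ->
  cvX_unif (fun k => joinmap (A k) (a k)) (joinmap A' a') ->
  cvX_unif (fun k => joinmap (B k) (b k)) (joinmap B' b') ->
  cvX_unif (fun k => joinmap (fun p => A k (H (B k p))) (fun z => a k (h (b k z))))
           (joinmap (fun p => A' (H (B' p))) (fun z => a' (h (b' z)))).
Proof.
  intros HA' HM HJ HA HB. pose proof (cosh_hd_ge1 origin (A' origin)).
  intros e He.
  destruct (cvX_unif_comp _ _ _ _ _ (2 * M) ltac:(lra) HA HB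
    (isom_lipschitz _ _ M HA' HM) HJ e He) as [N HN].
  exists N. intros k Hk u. specialize (HN k Hk u). destruct u; exact HN.
Qed.

Lemma unif_cvg_compacts_of_cvX_unif (Fk : nat -> H3 -> H3) (fk : nat -> Sph -> Sph) F f :
  cvX_unif (fun k => joinmap (Fk k) (fk k)) (joinmap F f) ->
  (forall K, compactH K -> exists C, forall k p, K p ->
     cosh_hd origin (Fk k p) <= C /\ cosh_hd origin (F p) <= C) ->
  unif_cvg_compacts Fk F.
Proof.
  intros Hu Hbd K HK eps Heps. destruct (Hbd K HK) as [C0 HC0].
  set (C := Rmax C0 1). assert (HC : 1 <= C) by apply Rmax_r.
  set (eps' := Rmin eps 1). assert (He' : 0 < eps') by (apply Rmin_glb_lt; lra).
  destruct (Hu (eps' / (3 * C))) as [N HN]; [apply Rdiv_lt_0_compat; lra|].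
  exists N. intros k Hk p Kp. destruct (HC0 k p Kp) as [H1 H2].
  assert (C0 <= C) by apply Rmax_l.
  assert (eps' <= eps) by apply Rmin_l. assert (eps' <= 1) by apply Rmin_r.
  apply Rlt_le_trans with eps'; [|assumption].
  apply (hd_lt_of_dX _ _ C eps'); try lra. apply (HN k Hk (inl p)).
Qed.

Lemma unif_cvg_S_of_cvX_unif (Fk : nat -> H3 -> H3) (fk : nat -> Sph -> Sph) F f :
  cvX_unif (fun k => joinmap (Fk k) (fk k)) (joinmap F f) -> unif_cvg_S fk f.
Proof.
  intros Hu eps Heps. destruct (dS_lt_of_dX eps Heps) as [d [Hd Hdd]].
  destruct (Hu d Hd) as [N HN]. exists N. intros k Hk z. apply Hdd, (HN k Hk (inr z)).
Qed.

(** * Normalising a derived sequence *)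

Lemma equivariant_conjugate H h Gam1 Gam2 G g : equivariant_pair H h Gam1 Gam2 -> Gam1 G g ->
  exists F f, Gam2 F f /\ (forall p, F (H p) = H (G p)) /\ (forall z, f (h z) = h (g z)).
Proof.
  intros (HHb & _ & HJ & [[Hiso1 _] _] & [[Hiso2 _] _] & Eq1 & _) HG.
  destruct HHb as [[Hinj Hsurj] _].
  destruct (choice _ Hsurj) as [Hinv HHinv].
  assert (Hinv_l : forall p, Hinv (H p) = p) by (intro p; apply Hinj, HHinv).
  set (F := fun p => H (G (Hinv p))).
  assert (HFH : forall p, F (H p) = H (G p)) by (intro p; unfold F; rewrite Hinv_l; reflexivity).
  destruct (proj2 (Eq1 F)) as [f Hf]; [exists G, g; split; assumption|].
  exists F, f. split; [|split]; [assumption..|].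
  intro z.
  assert (E : forall u, joinmap F f (joinmap H h u) = joinmap H h (joinmap G g u)).
  { apply continuousX_eq_of_inl.
    - apply continuousX_comp; [apply (Hiso2 _ _ Hf)|exact HJ].
    - apply continuousX_comp; [exact HJ|apply (Hiso1 _ _ HG)].
    - intro p. cbn [joinmap]. rewrite HFH. reflexivity. }
  specialize (E (inr z)). cbn [joinmap] in E. injection E. auto.
Qed.

(* Cocompactness of [Gam1] moves any point into a fixed compact set; the element of [Gam1]
   used is traded for its conjugate in [Gam2] on the other side of [H]. *)
Lemma equivariant_absorb H h Gam1 Gam2 K q : equivariant_pair H h Gam1 Gam2 ->
  (forall q, exists G g k, Gam1 G g /\ K k /\ G k = q) ->
  exists G' g' F f, isom G' g' /\ isom F f /\ K (G' q) /\
    (forall p, F (H (G' p)) = H p) /\ (forall z, f (h (g' z)) = h z).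
Proof.
  intros HE Hcov. pose proof HE as (_ & _ & _ & [[Hiso1 [_ [_ Hinv1]]] _] & [[Hiso2 _] _] & _).
  destruct (Hcov q) as [G [g [k [HG [Hk Hgk]]]]].
  destruct (Hinv1 G g HG) as [G' [g' [HG' [HGG' [HG'G [Hgg' _]]]]]].
  destruct (equivariant_conjugate H h Gam1 Gam2 G g HE HG) as [F [f [HF [HFH Hfh]]]].
  exists G', g', F, f. split; [|split; [|split; [|split]]].
  - apply (Hiso1 _ _ HG').
  - apply (Hiso2 _ _ HF).
  - rewrite <- Hgk, HG'G. exact Hk.
  - intro p. rewrite HFH, HGG'. reflexivity.
  - intro z. rewrite Hfh, Hgg'. reflexivity.
Qed.

Lemma derived_normal_form H h Gam1 Gam2 Hn hn :
  equivariant_pair H h Gam1 Gam2 -> derived H h Hn hn ->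
  exists (A B : nat -> H3 -> H3) (a b : nat -> Sph -> Sph) (C : R),
    (forall n, isom (A n) (a n)) /\ (forall n, isom (B n) (b n)) /\
    (forall n, cosh_hd origin (B n origin) <= C) /\
    (forall n p, Hn n p = A n (H (B n p))) /\ (forall n z, hn n z = a n (h (b n z))).
Proof.
  intros HE [fI [gI [fB [gB [HfI [HgI [HHn Hhn]]]]]]].
  pose proof HE as (_ & _ & _ & (_ & _ & _ & K & HK & Hcov) & _).
  destruct (compactH_bounded K HK) as [C HC].
  destruct (choice (fun n (t : ((H3 -> H3) * (Sph -> Sph)) * ((H3 -> H3) * (Sph -> Sph))) =>
     isom (fst (fst t)) (snd (fst t)) /\ isom (fst (snd t)) (snd (snd t)) /\
     K (fst (fst t) (gI n origin)) /\
     (forall p, fst (snd t) (H (fst (fst t) p)) = H p) /\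
     (forall z, snd (snd t) (h (snd (fst t) z)) = h z))) as [T HT].
  { intro n. destruct (equivariant_absorb H h Gam1 Gam2 K (gI n origin) HE Hcov)
      as [G' [g' [F [f HGF]]]].
    exists ((G', g'), (F, f)). exact HGF. }
  exists (fun n p => fI n (fst (snd (T n)) p)), (fun n p => fst (fst (T n)) (gI n p)),
    (fun n z => fB n (snd (snd (T n)) z)), (fun n z => snd (fst (T n)) (gB n z)), C.
  split; [|split; [|split; [|split]]]; intro n; destruct (HT n) as (HG' & HF & HK' & HFH & Hfh).
  - apply isom_comp; [apply HfI|exact HF].
  - apply isom_comp; [exact HG'|apply HgI].
  - apply HC, HK'.
  - intro p. rewrite HHn, HFH. reflexivity.
  - intro z. rewrite Hhn, Hfh. reflexivity.
Qed.

Lemma tame_normal_form_bounded Hn H (A B : nat -> H3 -> H3) (a : nat -> Sph -> Sph) C :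
  tame Hn -> bilipschitz_bijection H -> (forall n, isom (A n) (a n)) ->
  (forall n, cosh_hd origin (B n origin) <= C) -> (forall n p, Hn n p = A n (H (B n p))) ->
  exists M, forall n, cosh_hd origin (A n origin) <= M.
Proof.
  intros Htame HHb HA HBo HHn.
  destruct (Htame origin) as [q [r Hqr]].
  destruct (bilipschitz_cosh_hd_bounded H HHb C) as [C' HC'].
  set (T := 2 * cosh_hd origin q * exp r).
  assert (HT : forall n, cosh_hd origin (Hn n origin) <= T).
  { intro n. pose proof (cosh_hd_triangle origin q (Hn n origin)).
    pose proof (cosh_hd_le_exp _ _ _ (Hqr n)). pose proof (cosh_hd_ge1 origin q).
    pose proof (cosh_hd_ge1 q (Hn n origin)). unfold T. nra. }
  exists (2 * T * C'). intro n.
  pose proof (cosh_hd_triangle origin (A n (H (B n origin))) (A n origin)) as Htri.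
  rewrite (isom_cosh_hd _ _ _ _ (HA n)), <- HHn in Htri.
  pose proof (HT n). pose proof (HC' _ (HBo n)) as HHB. rewrite cosh_hd_sym in HHB.
  pose proof (cosh_hd_ge1 origin (Hn n origin)). pose proof (cosh_hd_ge1 (H (B n origin)) origin).
  nra.
Qed.

Theorem lemma1p4 (H : H3 -> H3) (h : Sph -> Sph)
    (Gam1 Gam2 : (H3 -> H3) -> (Sph -> Sph) -> Prop)
    (Hn : nat -> H3 -> H3) (hn : nat -> Sph -> Sph) :
  equivariant_pair H h Gam1 Gam2 ->
  derived H h Hn hn ->
  tame Hn ->
  exists (fI gI : H3 -> H3) (fB gB : Sph -> Sph),
    isom fI fB /\ isom gI gB /\
    exists phi : nat -> nat,
      (forall k, (phi k < phi (S k))%nat) /\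
      unif_cvg_compacts (fun k => Hn (phi k)) (fun p => fI (H (gI p))) /\
      unif_cvg_S (fun k => hn (phi k)) (fun z => fB (h (gB z))).
Proof.
  intros HE Hder Htame. pose proof HE as (HHb & _ & HJ & _).
  destruct (derived_normal_form H h Gam1 Gam2 Hn hn HE Hder)
    as (A & B & a & b & C & HA & HB & HBo & HHn & Hhn).
  destruct (tame_normal_form_bounded Hn H A B a C Htame HHb HA HBo HHn) as [M HAo].
  destruct (isom_seq_subconverges A a M HA HAo) as (phi1 & A' & a' & Hphi1 & HA' & HA'o & HcvA).
  destruct (isom_seq_subconverges (fun k => B (phi1 k)) (fun k => b (phi1 k)) C
    (fun k => HB _) (fun k => HBo _)) as (phi2 & B' & b' & Hphi2 & HB' & HB'o & HcvB).
  assert (Hn = fun n p => A n (H (B n p))) as ->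
    by (extensionality n; extensionality p; apply HHn).
  assert (hn = fun n z => a n (h (b n z))) as -> by (extensionality n; extensionality z; apply Hhn).
  pose proof (cvX_unif_isom_compose (fun k => A (phi1 (phi2 k))) (fun k => B (phi1 (phi2 k)))
    (fun k => a (phi1 (phi2 k))) (fun k => b (phi1 (phi2 k))) A' a' B' b' H h M
    HA' HA'o HJ (cvX_unif_subseq _ _ _ HcvA Hphi2) HcvB) as Hcv.
  exists A', B', a', b'. split; [exact HA'|split; [exact HB'|]].
  exists (fun k => phi1 (phi2 k)). split; [|split].
  - apply increasing_comp; assumption.
  - apply (unif_cvg_compacts_of_cvX_unif _ _ _ _ Hcv). intros K HK.
    destruct (compactH_bounded K HK) as [CK HCK].
    destruct (cosh_hd_origin_compose_bounded H M C CK HHb) as [C' HC'].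
    exists C'. intros k p Kp. split; eapply HC'; eauto.
  - exact (unif_cvg_S_of_cvX_unif _ _ _ _ Hcv).
Qed.
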